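(* Let $E$ be a separable Banach space and let $\{A(t)\}_{t\geq 0}$ be a family of linear operators in $E$. For $\lambda>0$ let $\{R^{(\lambda)}(t,s)\}_{t\geq s\geq 0}$ be a linear evolution system on $E$ corresponding to the problems $\dot u(t)=A(t/\lambda)u(t)$, $t>s$, $u(s)=\bar u\in E$. Suppose that (A1) there are $M\geq 1$ and $\omega\in\mathbb{R}$ such that $\|R^{(\lambda)}(t,s)\|\leq Me^{\omega(t-s)}$ for all $\lambda>0$ and $t\geq s\geq 0$; (A2) there exists a $C_0$ semigroup $\{\widehat S(t)\}_{t\geq 0}$ of bounded linear operators on $E$ with infinitesimal generator $\widehat A$ such that, for any $\bar u\in E$ and $t,s\geq 0$ with $t\geq s$, $\lim_{\lambda\to 0^+,\ \bar v\to\bar u} R^{(\lambda)}(t,s)\bar v=\widehat S(t-s)\bar u$, uniformly with respect to $t,s$ from bounded intervals; (A3) $F:[0,+\infty)\times E\to E$ is continuous, Lipschitz on bounded subsets of $E$ in the second variable uniformly with respect to $t\geq 0$, and has sublinear growth uniformly with respect to $t$, i.e. there is $c>0$ with $\|F(t,\bar v)\|\leq c(1+\|\bar v\|)$ for all $t\geq 0$, $\bar v\in E$; (A4) for each $\bar u\in E$ the set $\{F(t,\bar u)\mid t\geq 0\}$ is relatively compact, and there is a locally Lipschitz mapping $\widehat F:E\to E$ such that for any $\bar u\in E$ and $h>0$, $\widehat F(\bar u)=\lim_{T\to+\infty,\ \bar v\to\bar u}\frac{1}{T}\int_0^T F(\tau+h,\bar v)\,d\tau$, uniformly with respect to $h$.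 Then, for any sequences $(\lambda_n)$ in $(0,+\infty)$ and $(\bar u_n)$ in $E$ with $\lambda_n\to 0^+$ and $\bar u_n\to\bar u_0\in E$, the mild solutions $u_n:[0,+\infty)\to E$ of $\dot u(t)=A(t/\lambda_n)u(t)+F(t/\lambda_n,u(t))$, $t>0$, with $u_n(0)=\bar u_n$, converge uniformly on bounded intervals to the mild solution of the averaged problem $\dot u(t)=\widehat A u(t)+\widehat F(u(t))$, $t>0$, $u(0)=\bar u_0$.
   Context: An evolution system on $E$ is a family $\{R(t,s)\}_{t\geq s\geq 0}$ of bounded linear operators with $R(t,t)=I$, $R(t,s)R(s,r)=R(t,r)$ for $t\geq s\geq r\geq 0$, and $(s,t)\mapsto R(t,s)\bar u$ continuous for each $\bar u\in E$. A mild solution of $\dot u=A(t/\lambda)u+F(t/\lambda,u)$, $u(0)=\bar u$, on $[0,\omega)$ is a continuous $u:[0,\omega)\to E$ with $u(t)=R^{(\lambda)}(t,0)\bar u+\int_0^t R^{(\lambda)}(t,\tau)F(\tau/\lambda,u(\tau))\,d\tau$; for the averaged problem, mild solutions are defined with $\widehat S(t-\tau)$ in place of $R^{(\lambda)}(t,\tau)$ and $\widehat F(u(\tau))$ in place of $F(\tau/\lambda,u(\tau))$. *)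

From Stdlib Require Import Reals.
From Coquelicot Require Import Coquelicot.
Open Scope R_scope.

Section Defs.
Context {E : CompleteNormedModule R_AbsRing}.

Definition separable : Prop :=
  exists d : nat -> E, forall (x : E) (eps : R), 0 < eps ->
    exists n, norm (minus (d n) x) < eps.

Definition is_linear (L : E -> E) : Prop :=
  (forall x y, L (plus x y) = plus (L x) (L y)) /\
  (forall (k : R) x, L (scal k x) = scal k (L x)).

Definition is_bounded_linear (L : E -> E) : Prop :=
  is_linear L /\ exists C : R, forall x, norm (L x) <= C * norm x.

Definition evolution_system (Rts : R -> R -> E -> E) : Prop :=
  (forall t s, 0 <= s <= t -> is_bounded_linear (Rts t s)) /\
  (forall t x, 0 <= t -> Rts t t x = x) /\
  (forall t s r x, 0 <= r <= s -> s <= t -> Rts t s (Rts s r x) = Rts t r x) /\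
  (forall x t s, 0 <= s <= t -> forall eps, 0 < eps -> exists delta, 0 < delta /\
     forall t' s', 0 <= s' <= t' -> Rabs (t' - t) < delta -> Rabs (s' - s) < delta ->
       norm (minus (Rts t' s' x) (Rts t s x)) < eps).

Definition C0_semigroup (S : R -> E -> E) : Prop :=
  (forall t, 0 <= t -> is_bounded_linear (S t)) /\
  (forall x, S 0 x = x) /\
  (forall t s x, 0 <= t -> 0 <= s -> S (t + s) x = S t (S s x)) /\
  (forall x eps, 0 < eps -> exists delta, 0 < delta /\
     forall t, 0 <= t < delta -> norm (minus (S t x) x) < eps).

Definition rel_compact (A : E -> Prop) : Prop :=
  forall x : nat -> E, (forall n, A (x n)) ->
    exists (phi : nat -> nat) (l : E),
      (forall n, (phi n < phi (S n))%nat) /\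
      forall eps, 0 < eps -> exists N, forall n, (N <= n)%nat ->
        norm (minus (x (phi n)) l) < eps.

Definition continuous_nonneg (u : R -> E) : Prop :=
  forall t, 0 <= t -> forall eps, 0 < eps -> exists delta, 0 < delta /\
    forall s, 0 <= s -> Rabs (s - t) < delta -> norm (minus (u s) (u t)) < eps.

(* mild solution on [0,+oo) of u' = A(t/lam) u + F(t/lam, u), u(0) = u0,
   where Rl = R^(lam) is the evolution system of u' = A(t/lam) u *)
Definition mild_solution (Rl : R -> R -> E -> E) (F : R -> E -> E) (lam : R)
  (u0 : E) (u : R -> E) : Prop :=
  continuous_nonneg u /\
  forall t, 0 <= t ->
    is_RInt (fun tau => Rl t tau (F (tau / lam) (u tau))) 0 t
            (minus (u t) (Rl t 0 u0)).

(* mild solution on [0,+oo) of the averaged problem u' = Ahat u + Fhat u, u(0) = u0,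
   where S is the C0 semigroup generated by Ahat *)
Definition mild_solution_avg (S : R -> E -> E) (Fh : E -> E) (u0 : E) (u : R -> E) : Prop :=
  continuous_nonneg u /\
  forall t, 0 <= t ->
    is_RInt (fun tau => S (t - tau) (Fh (u tau))) 0 t (minus (u t) (S t u0)).

End Defs.

(* Both families of mild solutions exist globally by Picard iteration: the
   sublinear growth of the nonlinearity gives a priori bounds on every bounded
   interval, and its local Lipschitz continuity makes the iteration contract in
   an exponentially weighted sup norm.  The averaged nonlinearity inherits
   growth and Lipschitz bounds from F through the ergodic means.

   For the convergence, write u_n - u as the sum of
     R^(lam_n)(t,0) ub_n - S(t) u0,                                   (A2)
     int_0^t R^(lam_n)(t,tau) [F(tau/lam_n, u_n) - F(tau/lam_n, u)],  (Lipschitz)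
     int_0^t R^(lam_n)(t,tau) F(tau/lam_n, u) - S(t - tau) Fh(u),     (averaging)
   and conclude with Gronwall's inequality.  The averaging term tends to 0
   uniformly in t: on a short interval [a, a + d] the function u is almost
   constant, R^(lam)(a + d, tau) and S(a + d - tau) are almost the identity on
   the totally bounded set of values of F and Fh along u (this is where the
   relative compactness in (A4) enters), and the substitution tau = lam s turns
   the remaining integral of F(tau/lam, u(a)) into d times an ergodic mean of
   F over a window of length d/lam, which is close to d Fh(u(a)). *)

From Pilot Require Import Defs.
From Stdlib Require Import Reals Lra Lia List Classical ClassicalEpsilon.
From Coquelicot Require Import Coquelicot.
Open Scope R_scope.

Section AbelianGroupIdentities.
Context {G : AbelianGroup}.

Lemma plus_minus_cancel (x y : G) : plus y (minus x y) = x.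
Proof. unfold minus. rewrite plus_comm, <- plus_assoc, (plus_opp_l (G:=G)), plus_zero_r. reflexivity. Qed.

Lemma minus_plus_cancel_l (y a : G) : minus (plus y a) y = a.
Proof.
unfold minus. rewrite (plus_comm y a), <- plus_assoc, (plus_opp_r (G:=G)), plus_zero_r. reflexivity.
Qed.

Lemma minus_plus_swap (a b c : G) : minus (plus a b) c = plus (minus a c) b.
Proof. unfold minus. rewrite <- !plus_assoc, (plus_comm b). reflexivity. Qed.

Lemma minus_plus_plus (a b c d : G) : minus (plus a b) (plus c d) = plus (minus a c) (minus b d).
Proof.
unfold minus. rewrite (opp_plus (G:=G)), <- !plus_assoc. f_equal.
rewrite plus_comm, <- plus_assoc. f_equal. apply plus_comm.
Qed.

Lemma minus_minus_cancel_r (a b c : G) : minus (minus a c) (minus b c) = minus a b.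
Proof.
rewrite <- (plus_minus_cancel a c) at 2. rewrite <- (plus_minus_cancel b c) at 2.
rewrite minus_plus_plus, (minus_eq_zero (G:=G)), plus_zero_l. reflexivity.
Qed.

Lemma minus_trans3 (a b c e : G) : minus a b = plus (plus (minus a c) (minus c e)) (minus e b).
Proof. rewrite <- !minus_trans. reflexivity. Qed.

Lemma minus_decomp (a b c d : G) : minus a b = plus (minus c d) (minus (minus a c) (minus b d)).
Proof. rewrite <- minus_plus_plus, !plus_minus_cancel. reflexivity. Qed.

End AbelianGroupIdentities.

Lemma Rle_of_lt_eps (a b : R) : (forall eta, 0 < eta -> a < b + eta) -> a <= b.
Proof. intros H. apply Rnot_lt_le. intro h. specialize (H ((a - b) / 2) ltac:(lra)). lra. Qed.

Lemma exp_le_compat (x y : R) : x <= y -> exp x <= exp y.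
Proof. intros [h|h]. left. apply exp_increasing; auto. rewrite h; lra. Qed.

Section NormedSpace.
Context {E : CompleteNormedModule R_AbsRing}.

Lemma norm_plus_le (a b : E) : norm (plus a b) <= norm a + norm b.
Proof. apply (norm_triangle (K:=R_AbsRing) (V:=E)). Qed.

Lemma norm_minus_sym (x y : E) : norm (minus x y) = norm (minus y x).
Proof. rewrite <- (norm_opp (K:=R_AbsRing) (V:=E)), opp_minus. reflexivity. Qed.

Lemma norm_minus_triangle (x y z : E) : norm (minus x z) <= norm (minus x y) + norm (minus y z).
Proof. rewrite (minus_trans y). apply norm_plus_le. Qed.

Lemma norm_le_minus (x y : E) : norm x <= norm y + norm (minus x y).
Proof. rewrite <- (plus_minus_cancel x y) at 1. apply norm_plus_le. Qed.

Lemma norm_minus_le_plus (x y : E) : norm (minus x y) <= norm x + norm y.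
Proof.
unfold minus. eapply Rle_trans. apply norm_plus_le.
rewrite (norm_opp (K:=R_AbsRing) (V:=E)). lra.
Qed.

Lemma norm_minus_self (x : E) : norm (minus x x) = 0.
Proof. rewrite minus_eq_zero. apply (norm_zero (K:=R_AbsRing) (V:=E)). Qed.

Lemma norm_scal_R (k : R) (x : E) : norm (scal k x) <= Rabs k * norm x.
Proof. apply (norm_scal (K:=R_AbsRing) (V:=E)). Qed.

Lemma norm_scal_minus (k : R) (a b : E) :
  norm (minus (scal k a) (scal k b)) <= Rabs k * norm (minus a b).
Proof. rewrite <- (scal_minus_distr_l (K:=R_Ring) (V:=E)). apply norm_scal_R. Qed.

Lemma eq_of_norm_minus_small (x y : E) :
  (forall eps, 0 < eps -> norm (minus x y) < eps) -> x = y.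
Proof.
intros H. assert (Hn : norm (minus x y) = 0).
{ destruct (Rle_lt_or_eq_dec 0 _ (norm_ge_0 (minus x y))) as [h|h]; [|auto].
  specialize (H _ h). lra. }
apply norm_eq_zero in Hn. rewrite <- (plus_minus_cancel x y), Hn, plus_zero_r. reflexivity.
Qed.

Lemma continuous_of_eps (f : R -> E) x :
  (forall eps, 0 < eps -> exists d, 0 < d /\ forall y, Rabs (y - x) < d ->
     norm (minus (f y) (f x)) < eps) -> continuous f x.
Proof.
intros H P [e HP]. destruct (H e (cond_pos e)) as [d [Hd Hy]].
exists (mkposreal d Hd). intros y Hy'. apply HP.
apply (norm_compat1 (K:=R_AbsRing) (V:=E)). apply Hy. exact Hy'.
Qed.

(* From here on [is_linear] is Coquelicot's notion (linear and bounded), which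
   shadows the algebraic one of [Defs]. *)
Lemma is_linear_of_bounded (L : E -> E) : is_bounded_linear L -> is_linear L.
Proof.
intros [[H1 H2] [C HC]]. apply Build_is_linear; auto.
exists (Rmax C 1). split. apply Rlt_le_trans with 1; [lra|apply Rmax_r].
intros x. eapply Rle_trans. apply HC. apply Rmult_le_compat_r. apply norm_ge_0. apply Rmax_l.
Qed.

Lemma Riemann_sum_linear (L : E -> E) (f : R -> E) ptd : is_linear L ->
  L (Riemann_sum f ptd) = Riemann_sum (fun x => L (f x)) ptd.
Proof.
intros HL. unfold Riemann_sum. destruct ptd as [h t]. simpl.
match goal with |- context [seq.pairmap _ ?p _] => generalize p end.
induction t as [|a t IH]; intros p; simpl.
- apply (linear_zero (K:=R_AbsRing) (U:=E) (V:=E)); auto.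
- rewrite (linear_plus (K:=R_AbsRing) (U:=E) (V:=E)), (linear_scal (K:=R_AbsRing) (U:=E) (V:=E)), IH; auto.
Qed.

Lemma is_RInt_linear (L : E -> E) (f : R -> E) a b l : is_linear L ->
  is_RInt f a b l -> is_RInt (fun x => L (f x)) a b (L l).
Proof.
intros HL H. unfold is_RInt in *.
eapply filterlim_ext.
2: { eapply filterlim_comp. exact H. apply linear_cont. exact HL. }
intros ptd. simpl. rewrite (linear_scal (K:=R_AbsRing) (U:=E) (V:=E)), Riemann_sum_linear; auto.
Qed.

Lemma is_RInt_val (f : R -> E) a b l l' : is_RInt f a b l -> l = l' -> is_RInt f a b l'.
Proof. intros H <-; auto. Qed.

Lemma norm_RInt_le_const (f : R -> E) a b l K : a <= b -> is_RInt f a b l ->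
  (forall s, a <= s <= b -> norm (f s) <= K) -> norm l <= (b - a) * K.
Proof.
intros Hab Hf Hle. apply (norm_RInt_le f (fun _ => K) a b l); auto.
apply (is_RInt_const a b K).
Qed.

Lemma RInt_split (f : R -> E) a b c : a <= b <= c -> ex_RInt f a c ->
  exists l1 l2, is_RInt f a b l1 /\ is_RInt f b c l2 /\ RInt f a c = plus l1 l2.
Proof.
intros Habc Hf.
assert (H1 := RInt_correct f a b (ex_RInt_Chasles_1 f a b c Habc Hf)).
assert (H2 := RInt_correct f b c (ex_RInt_Chasles_2 f a b c Habc Hf)).
exists (RInt f a b), (RInt f b c). split; auto. split; auto.
apply is_RInt_unique. eapply is_RInt_Chasles; eauto.
Qed.

Lemma ex_RInt_sub (f : R -> E) p q t : 0 <= p <= q -> q <= t -> ex_RInt f 0 t -> ex_RInt f p q.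
Proof.
intros Hpq Hqt H. apply (ex_RInt_Chasles_1 f p q t). lra.
apply (ex_RInt_Chasles_2 f 0 p t). lra. auto.
Qed.

End NormedSpace.

(** * Compactness on intervals *)

Lemma lebesgue_number2 (a b : R) (Q : R -> R -> R -> Prop) :
  (forall t, a <= t <= b -> exists d, 0 < d /\
     forall s r, a <= s <= b -> Rabs (s - t) < d -> Rabs r < d -> Q t s r) ->
  exists d, 0 < d /\ forall s, a <= s <= b -> exists t0, a <= t0 <= b /\
     forall s' r, a <= s' <= b -> Rabs (s' - s) < d -> Rabs r < d -> Q t0 s' r.
Proof.
intros H.
assert (Hd : forall t, {d : posreal | a <= t <= b -> forall s r, a <= s <= b ->
                          Rabs (s - t) < d -> Rabs r < d -> Q t s r}).
{ intros t. apply constructive_indefinite_description.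
  destruct (classic (a <= t <= b)) as [Ht|Ht].
  - destruct (H t Ht) as [d [Hd Hq]]. exists (mkposreal d Hd). intros _. exact Hq.
  - exists (mkposreal 1 Rlt_0_1). intros; contradiction. }
set (delta := fun t => proj1_sig (Hd t)).
set (delta2 := fun t => mkposreal (delta t / 2)
  (ltac:(unfold delta; destruct (Hd t) as [[x hx] ?]; simpl; lra))).
destruct (compactness_value_1d a b delta2) as [d Hc].
exists d. split. apply cond_pos. intros s Hs.
apply NNPP. intro Hn. apply (Hc s Hs). intros [t0 [Ht0 [H1 H2]]]. apply Hn.
exists t0. split. exact Ht0. intros s' r Hs' Hss Hr.
unfold delta2 in H1, H2; simpl in H1, H2.
pose proof (Rabs_pos (s - t0)).
apply (proj2_sig (Hd t0) Ht0 s' r Hs'); fold (delta t0).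
- replace (s' - t0) with ((s' - s) + (s - t0)) by ring.
  eapply Rle_lt_trans. apply Rabs_triang. lra.
- lra.
Qed.

Lemma lebesgue_number (a b : R) (Q : R -> R -> Prop) :
  (forall t, a <= t <= b -> exists d, 0 < d /\ forall s, a <= s <= b -> Rabs (s - t) < d -> Q t s) ->
  exists d, 0 < d /\ forall s, a <= s <= b -> exists t0, a <= t0 <= b /\
     forall s', a <= s' <= b -> Rabs (s' - s) < d -> Q t0 s'.
Proof.
intros H. destruct (lebesgue_number2 a b (fun t s _ => Q t s)) as [d [Hd Hl]].
{ intros t Ht. destruct (H t Ht) as [d [Hd Hq]]. exists d. split; auto. }
exists d. split; auto. intros s Hs. destruct (Hl s Hs) as [t0 [Ht0 Hq]].
exists t0. split; auto. intros s' Hs' Hss. apply (Hq s' 0); auto. rewrite Rabs_R0; auto.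
Qed.

Lemma interval_grid (a b d : R) : a <= b -> 0 < d -> exists N : nat, forall s, a <= s <= b ->
  exists k, (k <= N)%nat /\ a + INR k * d <= s /\ s < a + INR k * d + d.
Proof.
intros Hab Hd. assert (H0 : 0 <= (b - a) / d) by (apply Rdiv_le_0_compat; lra).
destruct (nfloor_ex _ H0) as [N HN]. exists N. intros s Hs.
assert (H1 : 0 <= (s - a) / d) by (apply Rdiv_le_0_compat; lra).
destruct (nfloor_ex _ H1) as [k Hk]. exists k.
assert ((s - a) / d <= (b - a) / d)
  by (apply Rmult_le_compat_r; [left; apply Rinv_0_lt_compat; lra| lra]).
split.
- assert (INR k < INR N + 1) by lra. rewrite <- S_INR in H2. apply INR_lt in H2. lia.
- destruct Hk as [Hk1 Hk2].
  apply Rmult_le_compat_r with (r := d) in Hk1; [|lra].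
  apply Rmult_lt_compat_r with (r := d) in Hk2; [|lra].
  unfold Rdiv in *. rewrite Rmult_assoc, Rinv_l in Hk1, Hk2 by lra. lra.
Qed.

Lemma bounded_up_to (g : nat -> R) (N : nat) : exists B, forall k, (k <= N)%nat -> g k <= B.
Proof.
induction N as [|N [B HB]].
- exists (g 0%nat). intros k Hk. replace k with 0%nat by lia. lra.
- exists (Rmax B (g (S N))). intros k Hk. destruct (Nat.eq_dec k (S N)) as [->|h].
  + apply Rmax_r.
  + eapply Rle_trans. apply HB. lia. apply Rmax_l.
Qed.

Lemma list_min_threshold {X : Type} (l : list X) (P : X -> R -> Prop) :
  (forall z d d', 0 < d' <= d -> P z d -> P z d') ->
  (forall z, In z l -> exists d, 0 < d /\ P z d) ->
  exists d, 0 < d /\ forall z, In z l -> P z d.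
Proof.
intros Hm. induction l as [|z l IH]; intros H.
- exists 1. split. lra. intros z [].
- destruct (H z (or_introl eq_refl)) as [d1 [Hd1 P1]].
  destruct IH as [d2 [Hd2 P2]]. intros; apply H; right; auto.
  exists (Rmin d1 d2). split. apply Rmin_pos; auto.
  intros y [Hy|Hy].
  + rewrite <- Hy. apply (Hm z d1). split. apply Rmin_pos; auto. apply Rmin_l. auto.
  + apply (Hm y d2). split. apply Rmin_pos; auto. apply Rmin_r. auto.
Qed.

Lemma small_pow_half (C eps : R) : 0 <= C -> 0 < eps -> exists k, C * (/2) ^ k < eps.
Proof.
intros HC He.
destruct (pow_lt_1_zero (/2) ltac:(rewrite Rabs_right; lra) (eps / (C + 1))) as [N HN].
{ apply Rdiv_lt_0_compat; lra. }
exists N. specialize (HN N (le_n _)). rewrite Rabs_right in HN by (left; apply pow_lt; lra).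
assert (0 < (/2)^N) by (apply pow_lt; lra).
apply Rle_lt_trans with ((C + 1) * (/2)^N). nra.
apply Rmult_lt_compat_l with (r := C + 1) in HN; [|lra].
replace ((C + 1) * (eps / (C + 1))) with eps in HN by (field; lra). exact HN.
Qed.

Section CompactSets.
Context {E : CompleteNormedModule R_AbsRing}.

Definition cont_on (f : R -> E) a b := forall t, a <= t <= b -> forall eps, 0 < eps ->
  exists d, 0 < d /\ forall s, a <= s <= b -> Rabs (s - t) < d -> norm (minus (f s) (f t)) < eps.

Lemma cont_on_of_nonneg (u : R -> E) T : continuous_nonneg u -> cont_on u 0 T.
Proof.
intros H t Ht eps He. destruct (H t (proj1 Ht) eps He) as [d [Hd Hs]].
exists d. split; auto. intros s Hs' Hst. apply Hs; auto. lra.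
Qed.

Lemma cont_on_uniform (f : R -> E) a b : cont_on f a b -> forall eps, 0 < eps ->
  exists d, 0 < d /\ forall s t, a <= s <= b -> a <= t <= b -> Rabs (s - t) < d ->
    norm (minus (f s) (f t)) < eps.
Proof.
intros H eps He.
destruct (lebesgue_number a b (fun t s => norm (minus (f s) (f t)) < eps / 2)) as [d [Hd Hl]].
{ intros t Ht. apply (H t Ht). lra. }
exists d. split; auto. intros s t Hs Ht Hst.
destruct (Hl s Hs) as [t0 [Ht0 Hq]].
eapply Rle_lt_trans. apply (norm_minus_triangle _ (f t0)).
rewrite (norm_minus_sym (f t0)).
assert (norm (minus (f s) (f t0)) < eps/2) by (apply Hq; auto; rewrite Rminus_eq_0, Rabs_R0; auto).
assert (norm (minus (f t) (f t0)) < eps/2) by (apply Hq; auto; rewrite Rabs_minus_sym; auto).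
lra.
Qed.

Lemma cont_on_bounded (f : R -> E) a b : a <= b -> cont_on f a b ->
  exists B, forall s, a <= s <= b -> norm (f s) <= B.
Proof.
intros Hab H. destruct (cont_on_uniform f a b H 1 Rlt_0_1) as [d [Hd Hu]].
destruct (interval_grid a b d Hab Hd) as [N HN].
destruct (bounded_up_to (fun k => norm (f (a + INR k * d))) N) as [B HB].
exists (B + 1). intros s Hs. destruct (HN s Hs) as [k [Hk [H1 H2]]].
assert (Hg : a <= a + INR k * d <= b). { split. pose proof (pos_INR k). nra. lra. }
eapply Rle_trans. apply (norm_le_minus _ (f (a + INR k * d))).
assert (norm (minus (f s) (f (a + INR k * d))) < 1). { apply Hu; auto. rewrite Rabs_right; lra. }
specialize (HB k Hk). simpl in HB. lra.
Qed.

Definition totally_bounded (K : E -> Prop) := forall eps, 0 < eps -> exists l : list E,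
  forall y, K y -> exists z, In z l /\ norm (minus y z) < eps.

Lemma totally_bounded_image (f : R -> E) a b : a <= b -> cont_on f a b ->
  totally_bounded (fun y => exists s, a <= s <= b /\ y = f s).
Proof.
intros Hab H eps He. destruct (cont_on_uniform f a b H eps He) as [d [Hd Hu]].
destruct (interval_grid a b d Hab Hd) as [N HN].
exists (map (fun k => f (a + INR k * d)) (seq 0 (S N))).
intros y [s [Hs ->]]. destruct (HN s Hs) as [k [Hk [H1 H2]]].
exists (f (a + INR k * d)). split.
- apply (in_map (fun k => f (a + INR k * d))). apply in_seq. lia.
- apply Hu; auto. split. pose proof (pos_INR k). nra. lra. rewrite Rabs_right; lra.
Qed.

Lemma totally_bounded_approx (K : E -> Prop) :
  (forall eps, 0 < eps -> exists K', totally_bounded K' /\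
     forall y, K y -> exists z, K' z /\ norm (minus y z) < eps) ->
  totally_bounded K.
Proof.
intros H eps He. destruct (H (eps/2) ltac:(lra)) as [K' [HK' Hy]].
destruct (HK' (eps/2) ltac:(lra)) as [l Hl]. exists l. intros y Ky.
destruct (Hy y Ky) as [z [Kz Hz]]. destruct (Hl z Kz) as [w [Hw Hzw]].
exists w. split; auto. eapply Rle_lt_trans. apply (norm_minus_triangle _ z). lra.
Qed.

Lemma totally_bounded_list_union {I : Type} (l : list I) (K : I -> E -> Prop) :
  (forall i, In i l -> totally_bounded (K i)) ->
  totally_bounded (fun y => exists i, In i l /\ K i y).
Proof.
induction l as [|i l IH]; intros H eps He.
- exists nil. intros y [i [[] _]].
- destruct (H i (or_introl eq_refl) eps He) as [l1 H1].
  destruct (IH (fun j hj => H j (or_intror hj)) eps He) as [l2 H2].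
  exists (l1 ++ l2). intros y [j [[<-|hj] Ky]].
  + destruct (H1 y Ky) as [z [? ?]]. exists z. split; auto. apply in_or_app; auto.
  + destruct (H2 y (ex_intro _ j (conj hj Ky))) as [z [? ?]].
    exists z. split; auto. apply in_or_app; auto.
Qed.

Lemma totally_bounded_union (K1 K2 : E -> Prop) :
  totally_bounded K1 -> totally_bounded K2 -> totally_bounded (fun y => K1 y \/ K2 y).
Proof.
intros H1 H2 eps He. destruct (H1 eps He) as [l1 L1]. destruct (H2 eps He) as [l2 L2].
exists (l1 ++ l2). intros y [Ky|Ky].
- destruct (L1 y Ky) as [z [? ?]]. exists z. split; auto. apply in_or_app; auto.
- destruct (L2 y Ky) as [z [? ?]]. exists z. split; auto. apply in_or_app; auto.
Qed.

Fixpoint greedy_seq (next : list E -> E) (n : nat) : list E :=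
  match n with O => nil | S n => next (greedy_seq next n) :: greedy_seq next n end.

Lemma greedy_seq_in next i j : (i < j)%nat -> In (next (greedy_seq next i)) (greedy_seq next j).
Proof.
induction j; intros H. lia. simpl.
destruct (Nat.eq_dec i j) as [->|h]. left; auto. right. apply IHj. lia.
Qed.

(* Otherwise a greedy choice of points at mutual distance >= eps gives a sequence
   without convergent subsequence. *)
Lemma totally_bounded_of_rel_compact (A : E -> Prop) : rel_compact A -> totally_bounded A.
Proof.
intros H eps He. apply NNPP. intro Hn.
assert (Hx : forall l : list E, exists y, A y /\ forall z, In z l -> eps <= norm (minus y z)).
{ intros l. apply NNPP. intro Hl. apply Hn. exists l. intros y Ay.
  apply NNPP. intro Hy. apply Hl. exists y. split; auto. intros z Hz.
  apply Rnot_lt_le. intro. apply Hy. exists z; auto. }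
set (next := fun l => proj1_sig (constructive_indefinite_description _ (Hx l))).
assert (Hnext : forall l, A (next l) /\ forall z, In z l -> eps <= norm (minus (next l) z)).
{ intros l. unfold next. destruct (constructive_indefinite_description _ (Hx l)). auto. }
set (x := fun n => next (greedy_seq next n)).
destruct (H x (fun n => proj1 (Hnext _))) as [phi [l [Hphi Hc]]].
destruct (Hc (eps / 2) ltac:(lra)) as [N HN].
assert (Hsep : norm (minus (x (phi (S N))) (x (phi N))) >= eps).
{ apply Rle_ge. unfold x at 1. apply (proj2 (Hnext _)). apply greedy_seq_in. apply Hphi. }
assert (H1 := HN N (le_n _)). assert (H2 := HN (S N) ltac:(lia)).
assert (norm (minus (x (phi (S N))) (x (phi N))) < eps).
{ eapply Rle_lt_trans. apply (norm_minus_triangle _ l). rewrite (norm_minus_sym l). lra. }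
lra.
Qed.

End CompactSets.

Lemma is_RInt_affine_exp (al be b t : R) : b <> 0 ->
  is_RInt (fun s => al + be * exp (b * s)) 0 t (al * t + be / b * (exp (b * t) - 1)).
Proof.
intros Hb.
assert (Hexp : is_RInt (fun s => be * exp (b * s)) 0 t (be / b * (exp (b * t) - 1))).
{ replace (be / b * (exp (b * t) - 1)) with (minus (be / b * exp (b * t)) (be / b * exp (b * 0))).
  apply (is_RInt_derive (fun s => be / b * exp (b * s))).
  - intros x _. auto_derive; auto. field; auto.
  - intros x _. apply (ex_derive_continuous (fun s => be * exp (b * s))). auto_derive; auto.
  - rewrite Rmult_0_r, exp_0. unfold minus, plus, opp; simpl. ring. }
assert (H := is_RInt_plus _ _ 0 t _ _ (is_RInt_const 0 t al) Hexp).
replace (al * t + be / b * (exp (b * t) - 1))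
  with (plus (scal (t - 0) al) (be / b * (exp (b * t) - 1))).
exact H. unfold plus, scal; simpl. unfold mult; simpl. ring.
Qed.

Lemma norm_RInt_le_exp {E : CompleteNormedModule R_AbsRing} (f : R -> E) (t : R) (l : E) (al be b : R) :
  0 <= t -> 0 < b -> is_RInt f 0 t l ->
  (forall s, 0 <= s <= t -> norm (f s) <= al + be * exp (b * s)) ->
  norm l <= al * t + be / b * (exp (b * t) - 1).
Proof.
intros Ht Hb Hf Hle.
apply (norm_RInt_le f (fun s => al + be * exp (b * s)) 0 t l); auto.
apply is_RInt_affine_exp. lra.
Qed.

(* Gronwall's lemma in bootstrap form: if every exponential bound with rate 2b
   and constant m improves to a + m/2 exp(2bt), then phi <= 2a exp(2bt).
   Apply it to the least such constant m, which exists since phi is bounded. *)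
Lemma gronwall_exp (T a b : R) (phi : R -> R) : 0 < b -> 0 <= a ->
  (forall s, 0 <= s <= T -> 0 <= phi s) -> (exists B, forall s, 0 <= s <= T -> phi s <= B) ->
  (forall m, 0 <= m -> (forall s, 0 <= s <= T -> phi s <= m * exp (2 * b * s)) ->
     forall t, 0 <= t <= T -> phi t <= a + m / 2 * exp (2 * b * t)) ->
  forall t, 0 <= t <= T -> phi t <= 2 * a * exp (2 * b * t).
Proof.
intros Hb Ha Hpos [B HB] Hg t Ht.
set (S := fun y => exists s, 0 <= s <= T /\ y = phi s * exp (- (2 * b * s))).
assert (Hexp : forall s, 0 <= s -> 0 < exp (- (2 * b * s)) <= 1).
{ intros s Hs. split. apply exp_pos. rewrite <- exp_0. apply exp_le_compat. nra. }
assert (Hinv : forall s, exp (2 * b * s) * exp (- (2 * b * s)) = 1).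
{ intros s. rewrite <- exp_plus. replace (2 * b * s + - (2 * b * s)) with 0 by ring. apply exp_0. }
destruct (completeness S) as [m0 [Hub Hlub]].
{ exists (Rabs B). intros y [s [Hs ->]]. specialize (Hexp s (proj1 Hs)). specialize (HB s Hs).
  specialize (Hpos s Hs). assert (B <= Rabs B) by apply Rle_abs. nra. }
{ exists (phi 0 * exp (- (2 * b * 0))). exists 0. split; auto; lra. }
assert (Hm0 : 0 <= m0).
{ eapply Rle_trans. 2: apply Hub. 2: exists 0; split; [lra|reflexivity].
  assert (0 <= phi 0) by (apply Hpos; lra). specialize (Hexp 0 (Rle_refl _)). nra. }
assert (Hle : forall s, 0 <= s <= T -> phi s <= m0 * exp (2 * b * s)).
{ intros s Hs. assert (h := Hub _ (ex_intro _ s (conj Hs eq_refl))).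
  assert (h2 := Hinv s). assert (0 < exp (2 * b * s)) by apply exp_pos.
  apply Rmult_le_compat_r with (r := exp (2 * b * s)) in h; [|lra].
  rewrite Rmult_assoc, (Rmult_comm (exp _)), h2, Rmult_1_r in h. exact h. }
assert (Hg' := Hg m0 Hm0 Hle).
assert (m0 <= a + m0 / 2).
{ apply Hlub. intros y [s [Hs ->]]. specialize (Hg' s Hs). specialize (Hexp s (proj1 Hs)).
  assert (h2 := Hinv s).
  apply Rmult_le_compat_r with (r := exp (- (2 * b * s))) in Hg'; [|lra].
  replace ((a + m0 / 2 * exp (2 * b * s)) * exp (- (2 * b * s)))
    with (a * exp (- (2 * b * s)) + m0 / 2) in Hg'
    by (rewrite Rmult_plus_distr_r, (Rmult_assoc (m0 / 2)), h2; ring).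
  nra. }
eapply Rle_trans. apply Hle; auto. apply Rmult_le_compat_r. left; apply exp_pos. lra.
Qed.

(** * Mild solutions by Picard iteration *)

Definition clamp (t x : R) := Rmin t (Rmax 0 x).

Lemma clamp_in t x : 0 <= t -> 0 <= clamp t x <= t.
Proof. intros; unfold clamp, Rmin, Rmax; repeat destruct Rle_dec; lra. Qed.

Lemma clamp_lip t x y : 0 <= t -> Rabs (clamp t x - clamp t y) <= Rabs (x - y).
Proof.
intros; unfold clamp, Rmin, Rmax; repeat destruct Rle_dec; unfold Rabs; repeat destruct Rcase_abs; lra.
Qed.

Lemma clamp_id t x : 0 <= x <= t -> clamp t x = x.
Proof. intros; unfold clamp, Rmin, Rmax; repeat destruct Rle_dec; lra. Qed.

Section MildSolutions.
Context {E : CompleteNormedModule R_AbsRing}.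
Context (U : R -> R -> E -> E) (Gf : R -> E -> E).
Hypothesis HU_lin : forall t s, 0 <= s <= t -> is_linear (U t s).
Hypothesis HU_bound : forall T, exists MT, 0 < MT /\ forall t s x, 0 <= s <= t -> t <= T ->
  norm (U t s x) <= MT * norm x.
Hypothesis HU_cont : forall x t s, 0 <= s <= t -> forall eps, 0 < eps -> exists d, 0 < d /\
  forall t' s', 0 <= s' <= t' -> Rabs (t' - t) < d -> Rabs (s' - s) < d ->
    norm (minus (U t' s' x) (U t s x)) < eps.
Hypothesis HG_cont : forall t x, 0 <= t -> forall eps, 0 < eps -> exists d, 0 < d /\
  forall t' y, 0 <= t' -> Rabs (t' - t) < d -> norm (minus y x) < d ->
    norm (minus (Gf t' y) (Gf t x)) < eps.

Lemma Gf_comp_cont (v : R -> E) : continuous_nonneg v -> continuous_nonneg (fun t => Gf t (v t)).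
Proof.
intros Hv t Ht eps He. destruct (HG_cont t (v t) Ht eps He) as [d [Hd Hg]].
destruct (Hv t Ht d Hd) as [d2 [Hd2 Hv2]].
exists (Rmin d d2). split. apply Rmin_pos; auto. intros s Hs Hst.
apply Hg; auto. eapply Rlt_le_trans. apply Hst. apply Rmin_l.
apply Hv2; auto. eapply Rlt_le_trans. apply Hst. apply Rmin_r.
Qed.

Lemma U_minus t s x y : 0 <= s <= t -> U t s (minus x y) = minus (U t s x) (U t s y).
Proof. intros H. apply (linear_minus (K:=R_AbsRing) (U:=E) (V:=E)). auto. Qed.

Lemma U_joint_cont (g : R -> E) t tau0 : continuous_nonneg g -> 0 <= tau0 <= t ->
  forall eps, 0 < eps -> exists d, 0 < d /\ forall t' tau, 0 <= tau <= t' ->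
    Rabs (t' - t) < d -> Rabs (tau - tau0) < d ->
    norm (minus (U t' tau (g tau)) (U t tau0 (g tau0))) < eps.
Proof.
intros Hg Ht eps He.
destruct (HU_bound (t + 1)) as [M1 [HM1 HM]].
destruct (Hg tau0 (proj1 Ht) (eps / 2 / M1)) as [d1 [Hd1 Hg1]].
{ apply Rdiv_lt_0_compat; lra. }
destruct (HU_cont (g tau0) t tau0 Ht (eps / 2)) as [d2 [Hd2 Hu2]]. lra.
exists (Rmin 1 (Rmin d1 d2)). split. repeat apply Rmin_pos; lra.
intros t' tau Htt Ht' Htau.
assert (h1 : Rmin 1 (Rmin d1 d2) <= 1) by apply Rmin_l.
assert (h2 : Rmin 1 (Rmin d1 d2) <= d1) by (eapply Rle_trans; [apply Rmin_r| apply Rmin_l]).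
assert (h3 : Rmin 1 (Rmin d1 d2) <= d2) by (eapply Rle_trans; [apply Rmin_r| apply Rmin_r]).
eapply Rle_lt_trans. apply (norm_minus_triangle _ (U t' tau (g tau0))).
rewrite <- U_minus by lra.
assert (norm (U t' tau (minus (g tau) (g tau0))) <= M1 * norm (minus (g tau) (g tau0))).
{ apply HM. lra. apply Rabs_def2 in Ht'. lra. }
assert (norm (minus (g tau) (g tau0)) < eps / 2 / M1) by (apply Hg1; lra).
assert (M1 * norm (minus (g tau) (g tau0)) < eps / 2).
{ apply Rmult_lt_compat_l with (r := M1) in H0; auto.
  replace (M1 * (eps / 2 / M1)) with (eps / 2) in H0 by (field; lra). auto. }
assert (norm (minus (U t' tau (g tau0)) (U t tau0 (g tau0))) < eps / 2) by (apply Hu2; lra).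
lra.
Qed.

(* The integrand is only meaningful for tau <= t; clamping tau into [0, t]
   extends it to a continuous function on R. *)
Lemma is_RInt_U (g : R -> E) t : continuous_nonneg g -> 0 <= t ->
  is_RInt (fun tau => U t tau (g tau)) 0 t (RInt (fun tau => U t tau (g tau)) 0 t).
Proof.
intros Hg Ht. apply RInt_correct.
set (h := fun tau => U t (clamp t tau) (g (clamp t tau))).
assert (Hh : ex_RInt h 0 t).
{ apply ex_RInt_continuous. intros z _. apply continuous_of_eps. intros eps He.
  destruct (U_joint_cont g t (clamp t z) Hg (clamp_in t z Ht) eps He) as [d [Hd Hu]].
  exists d. split; auto. intros y Hy. unfold h. apply Hu. apply clamp_in; auto.
  rewrite Rminus_eq_0, Rabs_R0; auto.
  eapply Rle_lt_trans. apply clamp_lip; auto. auto. }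
destruct Hh as [l Hl]. exists l. eapply is_RInt_ext. 2: exact Hl.
intros x Hx. rewrite Rmin_left, Rmax_right in Hx by lra. unfold h. rewrite clamp_id by lra. reflexivity.
Qed.

Lemma U_equicont (g : R -> E) t0 e : continuous_nonneg g -> 0 <= t0 -> 0 < e ->
  exists d, 0 < d /\ forall t' tau, 0 <= t' -> Rabs (t' - t0) < d -> 0 <= tau <= Rmin t0 t' ->
    norm (minus (U t' tau (g tau)) (U t0 tau (g tau))) <= e.
Proof.
intros Hg Ht0 He.
destruct (lebesgue_number2 0 t0 (fun tau0 tau r => 0 <= tau <= t0 + r ->
    norm (minus (U (t0 + r) tau (g tau)) (U t0 tau0 (g tau0))) < e / 2)) as [d [Hd Hl]].
{ intros tau0 Htau0. destruct (U_joint_cont g t0 tau0 Hg Htau0 (e / 2) ltac:(lra)) as [d [Hd Hu]].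
  exists d. split; auto. intros s r Hs Hsr Hr Hs2. apply Hu; auto.
  replace (t0 + r - t0) with r by ring. auto. }
exists d. split; auto. intros t' tau Ht' hd Htau.
assert (tau <= t0) by (eapply Rle_trans; [apply Htau| apply Rmin_l]).
assert (tau <= t') by (eapply Rle_trans; [apply Htau| apply Rmin_r]).
destruct (Hl tau ltac:(lra)) as [tau0 [Htau0 Hq]].
assert (q1 := Hq tau (t' - t0) ltac:(lra) ltac:(rewrite Rminus_eq_0, Rabs_R0; lra) hd ltac:(lra)).
assert (q2 := Hq tau 0 ltac:(lra) ltac:(rewrite Rminus_eq_0, Rabs_R0; lra)
                 ltac:(rewrite Rabs_R0; lra) ltac:(lra)).
replace (t0 + (t' - t0)) with t' in q1 by ring. rewrite Rplus_0_r in q2.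
eapply Rle_trans. apply (norm_minus_triangle _ (U t0 tau0 (g tau0))).
rewrite (norm_minus_sym (U t0 tau0 (g tau0))). lra.
Qed.

Lemma RInt_U_increment (g : R -> E) t0 t1 e K : continuous_nonneg g -> 0 <= t0 <= t1 ->
  (forall tau, 0 <= tau <= t0 -> norm (minus (U t1 tau (g tau)) (U t0 tau (g tau))) <= e) ->
  (forall tau, t0 <= tau <= t1 -> norm (U t1 tau (g tau)) <= K) ->
  norm (minus (RInt (fun tau => U t1 tau (g tau)) 0 t1) (RInt (fun tau => U t0 tau (g tau)) 0 t0))
    <= t0 * e + (t1 - t0) * K.
Proof.
intros Hg Ht He HK.
destruct (RInt_split (fun tau => U t1 tau (g tau)) 0 t0 t1) as [l1 [l2 [Hl1 [Hl2 Heq]]]].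
{ lra. } { eexists. apply is_RInt_U; auto. lra. }
rewrite Heq, (@minus_plus_swap E). eapply Rle_trans. apply norm_plus_le.
apply Rplus_le_compat.
- apply Rle_trans with ((t0 - 0) * e); [|lra]. eapply norm_RInt_le_const. lra.
  apply (is_RInt_minus _ _ _ _ _ _ Hl1 (is_RInt_U g t0 Hg ltac:(lra))). exact He.
- eapply norm_RInt_le_const; eauto. lra.
Qed.

Lemma convolution_cont (g : R -> E) : continuous_nonneg g ->
  continuous_nonneg (fun t => RInt (fun tau => U t tau (g tau)) 0 t).
Proof.
intros Hg t0 Ht0 eps He.
destruct (HU_bound (t0 + 1)) as [M1 [HM1 HM]].
destruct (cont_on_bounded g 0 (t0 + 1) ltac:(lra) (cont_on_of_nonneg g _ Hg)) as [B0 HB0].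
set (K := M1 * (Rabs B0 + 1)).
assert (HKp : 0 < K) by (unfold K; pose proof (Rabs_pos B0); nra).
assert (HK : forall t tau, 0 <= tau <= t -> t <= t0 + 1 -> norm (U t tau (g tau)) <= K).
{ intros t tau Htau Ht. eapply Rle_trans. apply HM; lra. apply Rmult_le_compat_l. lra.
  specialize (HB0 tau ltac:(lra)). pose proof (Rle_abs B0). lra. }
set (e := eps / (2 * (t0 + 1))).
assert (Hep : 0 < e) by (unfold e; apply Rdiv_lt_0_compat; lra).
assert (Hte : t0 * e = eps / 2 - e) by (unfold e; field; lra).
destruct (U_equicont g t0 e Hg Ht0 Hep) as [d [Hd Hpt]].
exists (Rmin d (Rmin 1 (eps / (2 * K)))). split.
{ repeat apply Rmin_pos; try lra. apply Rdiv_lt_0_compat; lra. }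
intros t' Ht' Htt.
assert (hd : Rabs (t' - t0) < d) by (eapply Rlt_le_trans; [apply Htt| apply Rmin_l]).
assert (h1 : Rabs (t' - t0) < 1)
  by (eapply Rlt_le_trans; [apply Htt| eapply Rle_trans; [apply Rmin_r| apply Rmin_l]]).
assert (h2 : Rabs (t' - t0) * K < eps / 2).
{ assert (Rabs (t' - t0) < eps / (2 * K))
    by (eapply Rlt_le_trans; [apply Htt| eapply Rle_trans; [apply Rmin_r| apply Rmin_r]]).
  apply Rmult_lt_compat_r with (r := K) in H; [|lra].
  replace (eps / (2 * K) * K) with (eps / 2) in H by (field; lra). exact H. }
apply Rabs_def2 in h1.
destruct (Rle_lt_dec t0 t') as [Hle|Hlt].
- rewrite Rabs_right in h2 by lra.
  eapply Rle_lt_trans. apply (RInt_U_increment g t0 t' e K Hg ltac:(lra)).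
  + intros tau Htau. apply Hpt; auto. rewrite Rmin_left; lra.
  + intros tau Htau. apply HK; lra.
  + lra.
- rewrite Rabs_left in h2 by lra. rewrite norm_minus_sym.
  eapply Rle_lt_trans. apply (RInt_U_increment g t' t0 e K Hg ltac:(lra)).
  + intros tau Htau. rewrite norm_minus_sym. apply Hpt; auto. rewrite Rmin_right; lra.
  + intros tau Htau. apply HK; lra.
  + assert (t' * e <= t0 * e) by (apply Rmult_le_compat_r; lra). lra.
Qed.


Hypothesis HG_lip : forall r, 0 < r -> exists L, forall t (x y : E), 0 <= t -> norm x <= r -> norm y <= r ->
  norm (minus (Gf t x) (Gf t y)) <= L * norm (minus x y).
Hypothesis HG_growth : exists c, 0 < c /\ forall t (v : E), 0 <= t -> norm (Gf t v) <= c * (1 + norm v).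

Lemma Gf_lip_pos r : 0 < r -> exists L, 0 < L /\ forall t (x y : E), 0 <= t -> norm x <= r -> norm y <= r ->
  norm (minus (Gf t x) (Gf t y)) <= L * norm (minus x y).
Proof.
intros Hr. destruct (HG_lip r Hr) as [L HL]. exists (Rabs L + 1). split. pose proof (Rabs_pos L); lra.
intros t x y Ht Hx Hy. eapply Rle_trans. apply HL; auto. apply Rmult_le_compat_r. apply norm_ge_0.
pose proof (Rle_abs L); lra.
Qed.

Lemma U_orbit_cont x : continuous_nonneg (fun t => U t 0 x).
Proof.
intros t Ht eps He. destruct (HU_cont x t 0 ltac:(lra) eps He) as [d [Hd Hu]].
exists d. split; auto. intros s Hs Hst. apply Hu; auto. lra. rewrite Rminus_eq_0, Rabs_R0; auto.
Qed.

Lemma continuous_nonneg_plus (f g : R -> E) : continuous_nonneg f -> continuous_nonneg g ->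
  continuous_nonneg (fun t => plus (f t) (g t)).
Proof.
intros Hf Hg t Ht eps He. destruct (Hf t Ht (eps/2) ltac:(lra)) as [d1 [Hd1 H1]].
destruct (Hg t Ht (eps/2) ltac:(lra)) as [d2 [Hd2 H2]].
exists (Rmin d1 d2). split. apply Rmin_pos; auto. intros s Hs Hst.
rewrite (@minus_plus_plus E). eapply Rle_lt_trans. apply norm_plus_le.
assert (norm (minus (f s) (f t)) < eps / 2). apply H1; auto. eapply Rlt_le_trans. apply Hst. apply Rmin_l.
assert (norm (minus (g s) (g t)) < eps / 2). apply H2; auto. eapply Rlt_le_trans. apply Hst. apply Rmin_r.
lra.
Qed.

Fixpoint picard (x : E) (k : nat) : R -> E :=
  match k with
  | O => fun t => U t 0 x
  | S k => fun t => plus (U t 0 x) (RInt (fun tau => U t tau (Gf tau (picard x k tau))) 0 t)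
  end.

Lemma picard_cont x k : continuous_nonneg (picard x k).
Proof.
induction k as [|k IH]; simpl. apply U_orbit_cont.
apply continuous_nonneg_plus. apply U_orbit_cont.
apply (convolution_cont (fun tau => Gf tau (picard x k tau))). apply Gf_comp_cont. auto.
Qed.

Lemma picard_step x k t : 0 <= t ->
  is_RInt (fun tau => U t tau (Gf tau (picard x k tau))) 0 t (minus (picard x (S k) t) (U t 0 x)).
Proof.
intros Ht.
replace (minus (picard x (S k) t) (U t 0 x))
  with (RInt (fun tau => U t tau (Gf tau (picard x k tau))) 0 t).
apply (is_RInt_U (fun tau => Gf tau (picard x k tau))). apply Gf_comp_cont, picard_cont. auto.
simpl. symmetry. apply (@minus_plus_cancel_l E).
Qed.

Lemma picard_exp_bound x T MT c : 0 < MT -> 0 < c ->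
  (forall t s y, 0 <= s <= t -> t <= T -> norm (U t s y) <= MT * norm y) ->
  (forall t v, 0 <= t -> norm (Gf t v) <= c * (1 + norm v)) ->
  forall k s, 0 <= s <= T -> norm (picard x k s) <= (MT * norm x + 1) * exp (MT * c * s) - 1.
Proof.
intros HMT Hc HM Hg. pose proof (norm_ge_0 x).
set (A := MT * norm x + 1). set (B := MT * c).
assert (HA : 0 < A) by (unfold A; nra). assert (HB : 0 < B) by (unfold B; nra).
induction k as [|k IH]; intros s Hs.
- simpl. assert (1 <= exp (B * s)) by (rewrite <- exp_0; apply exp_le_compat; nra).
  eapply Rle_trans. apply HM; lra.
  assert (0 <= A * (exp (B * s) - 1)) by (apply Rmult_le_pos; lra). unfold A in *. nra.
- eapply Rle_trans. apply (norm_le_minus _ (U s 0 x)).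
  apply Rle_trans with (MT * norm x + (0 * s + B * A / B * (exp (B * s) - 1))).
  + apply Rplus_le_compat. apply HM; lra.
    apply (norm_RInt_le_exp _ s _ 0 (B * A) B (proj1 Hs) HB (picard_step x k s (proj1 Hs))).
    intros tau Htau. eapply Rle_trans. apply HM; lra.
    eapply Rle_trans. apply Rmult_le_compat_l. lra. apply Hg. lra.
    assert (h := IH tau ltac:(lra)).
    apply Rle_trans with (MT * (c * (A * exp (B * tau)))).
    * apply Rmult_le_compat_l; [lra|]. apply Rmult_le_compat_l; lra.
    * right. change (0 + B * A * exp (B * tau)) with (0 + MT * c * A * exp (B * tau)). ring.
  + replace (B * A / B) with A by (field; lra). right. unfold A. ring.
Qed.

Lemma picard_bounded x T : exists R0, 0 < R0 /\ forall k s, 0 <= s <= T -> norm (picard x k s) <= R0.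
Proof.
destruct (HU_bound T) as [MT [HMT HM]]. destruct HG_growth as [c [Hc Hg]].
pose proof (norm_ge_0 x). pose proof (exp_pos (MT * c * T)).
assert (HMc : 0 < MT * c) by nra.
exists ((MT * norm x + 1) * exp (MT * c * T)). split. apply Rmult_lt_0_compat; nra.
intros k s Hs. eapply Rle_trans. apply (picard_exp_bound x T MT c); auto.
assert (exp (MT * c * s) <= exp (MT * c * T)) by (apply exp_le_compat; nra).
assert (0 <= (MT * norm x + 1) * (exp (MT * c * T) - exp (MT * c * s))) by (apply Rmult_le_pos; nra).
nra.
Qed.

Lemma picard_diff_exp_bound x T R0 MT L : 0 < MT -> 0 < L ->
  (forall t s y, 0 <= s <= t -> t <= T -> norm (U t s y) <= MT * norm y) ->
  (forall t (y z : E), 0 <= t -> norm y <= R0 -> norm z <= R0 ->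
     norm (minus (Gf t y) (Gf t z)) <= L * norm (minus y z)) ->
  (forall k s, 0 <= s <= T -> norm (picard x k s) <= R0) ->
  forall k s, 0 <= s <= T ->
    norm (minus (picard x (S k) s) (picard x k s)) <= 2 * R0 * (/2) ^ k * exp (2 * (MT * L) * s).
Proof.
intros HMT HL HM HLip Hb. set (b := MT * L). assert (Hb0 : 0 < b) by (unfold b; nra).
induction k as [|k IH]; intros s Hs;
  assert (HR0 : 0 <= R0) by (eapply Rle_trans; [apply (norm_ge_0 (picard x 0 s))| apply (Hb 0%nat s Hs)]).
- simpl pow. eapply Rle_trans. apply norm_minus_le_plus.
  assert (1 <= exp (2 * b * s)) by (rewrite <- exp_0; apply exp_le_compat; nra).
  assert (norm (picard x 1 s) <= R0) by (apply Hb; auto).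
  assert (norm (picard x 0 s) <= R0) by (apply Hb; auto). simpl picard in *. nra.
- assert (Hi := is_RInt_minus _ _ _ _ _ _ (picard_step x (S k) s (proj1 Hs)) (picard_step x k s (proj1 Hs))).
  apply (is_RInt_val _ _ _ _ (minus (picard x (S (S k)) s) (picard x (S k) s))) in Hi;
    [|apply (@minus_minus_cancel_r E)].
  set (m := 2 * R0 * (/ 2) ^ k).
  assert (Hpow : 0 < (/2)^k) by (apply pow_lt; lra).
  assert (Hm : 0 <= m) by (unfold m; nra).
  apply Rle_trans with (0 * s + b * m / (2 * b) * (exp (2 * b * s) - 1)).
  + apply (norm_RInt_le_exp _ s _ 0 (b * m) (2 * b) (proj1 Hs) ltac:(lra) Hi).
    intros tau Htau. cbv beta.
    rewrite <- U_minus by lra. eapply Rle_trans. apply HM; lra.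
    eapply Rle_trans. apply Rmult_le_compat_l. lra. apply HLip. lra. apply Hb; lra. apply Hb; lra.
    eapply Rle_trans. rewrite <- Rmult_assoc. apply Rmult_le_compat_l. nra. apply IH. lra.
    fold m. unfold b. right. ring.
  + simpl pow. unfold m. replace (b * (2 * R0 * (/ 2) ^ k) / (2 * b)) with (R0 * (/2)^k) by (field; lra).
    assert (0 < exp (2 * b * s)) by apply exp_pos. nra.
Qed.

Lemma picard_contraction x T : 0 <= T -> exists C, 0 <= C /\ forall k s, 0 <= s <= T ->
  norm (minus (picard x (S k) s) (picard x k s)) <= C * (/2) ^ k.
Proof.
intros HT.
destruct (picard_bounded x T) as [R0 [HR0 Hb]].
destruct (Gf_lip_pos R0 HR0) as [L [HL HLip]].
destruct (HU_bound T) as [MT [HMT HM]].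
pose proof (exp_pos (2 * (MT * L) * T)).
exists (2 * R0 * exp (2 * (MT * L) * T)). split. nra.
intros k s Hs. eapply Rle_trans. apply (picard_diff_exp_bound x T R0 MT L); auto.
assert (exp (2 * (MT * L) * s) <= exp (2 * (MT * L) * T))
  by (apply exp_le_compat; assert (0 < MT * L) by nra; nra).
assert (0 < (/2)^k) by (apply pow_lt; lra).
apply Rle_trans with (2 * R0 * (/2)^k * exp (2 * (MT * L) * T)). apply Rmult_le_compat_l; nra.
right; ring.
Qed.

Lemma picard_cauchy x T : 0 <= T -> exists C, 0 <= C /\ forall k p s, 0 <= s <= T ->
  norm (minus (picard x (k + p) s) (picard x k s)) <= 2 * C * ((/2) ^ k - (/2) ^ (k + p)).
Proof.
intros HT. destruct (picard_contraction x T HT) as [C [HC Hc]]. exists C. split; auto.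
intros k p s Hs. induction p as [|p IH].
- rewrite Nat.add_0_r, norm_minus_self. lra.
- eapply Rle_trans. apply (norm_minus_triangle _ (picard x (k + p) s)).
  rewrite Nat.add_succ_r. eapply Rle_trans. apply Rplus_le_compat. apply Hc; auto. apply IH.
  simpl pow. right. field.
Qed.

Definition picard_lim x t : E := lim (filtermap (fun k => picard x k t) eventually).

Lemma picard_lim_approx x T : 0 <= T -> exists C, 0 <= C /\ forall k s, 0 <= s <= T ->
  norm (minus (picard_lim x s) (picard x k s)) <= 2 * C * (/2) ^ k.
Proof.
intros HT. destruct (picard_cauchy x T HT) as [C [HC Hc]]. exists C. split; auto.
assert (Hc' : forall k n s, (k <= n)%nat -> 0 <= s <= T ->
   norm (minus (picard x n s) (picard x k s)) <= 2 * C * (/2) ^ k).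
{ intros k n s Hkn Hs. replace n with (k + (n - k))%nat by lia. eapply Rle_trans. apply Hc; auto.
  assert (0 < (/2) ^ (k + (n - k))) by (apply pow_lt; lra). nra. }
intros k s Hs.
assert (Hcau : cauchy (filtermap (fun k => picard x k s) eventually)).
{ intros eps. destruct (pow_lt_1_zero (/2) ltac:(rewrite Rabs_right; lra) (eps / (2 * C + 1)))
    as [N HN]. { apply Rdiv_lt_0_compat. apply cond_pos. lra. }
  exists (picard x N s). exists N. intros n Hn. apply (norm_compat1 (K:=R_AbsRing) (V:=E)).
  eapply Rle_lt_trans. apply Hc'; auto.
  specialize (HN N (le_n _)). rewrite Rabs_right in HN by (left; apply pow_lt; lra).
  apply Rle_lt_trans with ((2 * C + 1) * (/2)^N). assert (0 < (/2)^N) by (apply pow_lt; lra). nra.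
  apply Rmult_lt_compat_l with (r := 2 * C + 1) in HN; [|lra].
  replace ((2 * C + 1) * (eps / (2 * C + 1))) with (pos eps) in HN by (field; lra). exact HN. }
assert (Hl := complete_cauchy _ (filtermap_proper_filter _ _ _ _ eventually_filter) Hcau).
fold (picard_lim x s) in Hl.
apply Rle_of_lt_eps. intros eta Heta.
assert (Hnf : 0 < norm_factor (K:=R_AbsRing) (V:=E)) by apply norm_factor_gt_0.
set (ep := mkposreal (eta / norm_factor (K:=R_AbsRing) (V:=E)) ltac:(apply Rdiv_lt_0_compat; auto)).
destruct (Hl ep) as [N HN].
specialize (HN (max N k) (Nat.le_max_l _ _)).
apply (norm_compat2 (K:=R_AbsRing) (V:=E) _ _ ep) in HN. unfold ep in HN; simpl in HN.
replace (norm_factor * (eta / norm_factor)) with eta in HN by (field; lra).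
unfold picard_lim. eapply Rle_lt_trans. apply (norm_minus_triangle _ (picard x (max N k) s)).
rewrite (norm_minus_sym _ (picard x (max N k) s)).
assert (h : norm (minus (picard x (max N k) s) (picard x k s)) <= 2 * C * (/2) ^ k) by (apply Hc'; auto; lia).
eapply Rlt_le_trans. apply Rplus_lt_le_compat. exact HN. exact h. lra.
Qed.

Lemma picard_lim_cont x : continuous_nonneg (picard_lim x).
Proof.
intros t0 Ht0 eps He.
destruct (picard_lim_approx x (t0 + 1) ltac:(lra)) as [C [HC Hc]].
destruct (small_pow_half (2 * C) (eps / 3) ltac:(lra) ltac:(lra)) as [k Hk].
destruct (picard_cont x k t0 Ht0 (eps / 3) ltac:(lra)) as [d [Hd Hp]].
exists (Rmin d 1). split. apply Rmin_pos; lra. intros s Hs Hst.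
assert (Hst1 : Rabs (s - t0) < 1) by (eapply Rlt_le_trans; [apply Hst| apply Rmin_r]).
assert (Hst2 : Rabs (s - t0) < d) by (eapply Rlt_le_trans; [apply Hst| apply Rmin_l]).
apply Rabs_def2 in Hst1.
eapply Rle_lt_trans. apply (norm_minus_triangle _ (picard x k s)).
eapply Rle_lt_trans. apply Rplus_le_compat_l. apply (norm_minus_triangle _ (picard x k t0)).
rewrite (norm_minus_sym (picard x k t0)).
assert (h1 := Hc k s ltac:(lra)). assert (h2 := Hc k t0 ltac:(lra)). assert (h3 := Hp s Hs Hst2).
lra.
Qed.

Definition mild x u := continuous_nonneg u /\ forall t, 0 <= t ->
  is_RInt (fun tau => U t tau (Gf tau (u tau))) 0 t (minus (u t) (U t 0 x)).

Lemma picard_lim_mild x : mild x (picard_lim x).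
Proof.
split. apply picard_lim_cont. intros t Ht.
destruct (picard_lim_approx x t Ht) as [C [HC Hc]].
destruct (picard_bounded x t) as [R0 [HR0 Hb]].
assert (Hbl : forall s, 0 <= s <= t -> norm (picard_lim x s) <= R0).
{ intros s Hs. apply Rle_of_lt_eps. intros eta Heta.
  destruct (small_pow_half (2 * C) eta ltac:(lra) Heta) as [k Hk].
  eapply Rle_lt_trans. apply (norm_le_minus _ (picard x k s)).
  specialize (Hc k s Hs). specialize (Hb k s Hs). lra. }
destruct (Gf_lip_pos R0 HR0) as [L [HL HLip]].
destruct (HU_bound t) as [MT [HMT HM]].
assert (Hg : continuous_nonneg (fun tau => Gf tau (picard_lim x tau)))
  by (apply Gf_comp_cont, picard_lim_cont).
assert (Hi := is_RInt_U _ t Hg Ht).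
eapply is_RInt_val. exact Hi. symmetry. apply eq_of_norm_minus_small. intros eps He.
destruct (small_pow_half (2 * C * (1 + t * (MT * L))) eps) as [k Hk].
{ assert (0 <= t * (MT * L)) by (apply Rmult_le_pos; nra). nra. } auto.
eapply Rle_lt_trans. apply (norm_minus_triangle _ (minus (picard x (S k) t) (U t 0 x))).
rewrite ((@minus_minus_cancel_r E) (picard_lim x t) (picard x (S k) t) (U t 0 x)).
assert (Hd := is_RInt_minus _ _ _ _ _ _ (picard_step x k t Ht) Hi).
assert (h2 : norm (minus (minus (picard x (S k) t) (U t 0 x))
                        (RInt (fun tau => U t tau (Gf tau (picard_lim x tau))) 0 t))
   <= (t - 0) * (MT * L * (2 * C * (/2) ^ k))).
{ eapply norm_RInt_le_const. lra. exact Hd. intros tau Htau. cbv beta.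
  rewrite <- U_minus by lra. eapply Rle_trans. apply HM; lra.
  replace (MT * L * (2 * C * (/2)^k)) with (MT * (L * (2 * C * (/2)^k))) by ring.
  apply Rmult_le_compat_l. lra.
  eapply Rle_trans. apply HLip. lra. apply Hb; lra. apply Hbl; lra.
  apply Rmult_le_compat_l. lra. rewrite norm_minus_sym. apply Hc. lra. }
assert (h1 : norm (minus (picard_lim x t) (picard x (S k) t)) <= 2 * C * (/2) ^ k).
{ eapply Rle_trans. apply Hc. lra. assert (0 < (/2)^k) by (apply pow_lt; lra). simpl. nra. }
eapply Rle_lt_trans. apply Rplus_le_compat. exact h1. exact h2.
eapply Rle_lt_trans. 2: exact Hk. right. ring.
Qed.

Lemma mild_bounded x u T MT c : 0 <= T -> 0 < MT -> 0 < c ->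
  (forall t s y, 0 <= s <= t -> t <= T -> norm (U t s y) <= MT * norm y) ->
  (forall tau v, 0 <= tau -> norm (Gf tau v) <= c * (1 + norm v)) ->
  mild x u -> forall t, 0 <= t <= T -> norm (u t) <= 2 * (MT * norm x + MT * c * T) * exp (2 * (MT * c) * T).
Proof.
intros HT HMT Hc HM Hg [Hcu Hi].
set (a := MT * norm x + MT * c * T). set (b := MT * c).
assert (Hb : 0 < b) by (unfold b; nra).
assert (Ha : 0 <= a) by (unfold a; pose proof (norm_ge_0 x); assert (0 <= b * T) by nra; unfold b in *; nra).
assert (Hgr := gronwall_exp T a b (fun t => norm (u t)) Hb Ha).
intros t Ht. eapply Rle_trans. apply Hgr; auto.
- intros; apply norm_ge_0.
- apply (cont_on_bounded u 0 T HT (cont_on_of_nonneg u T Hcu)).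
- intros m Hm Hle t' Ht'. cbv beta.
  eapply Rle_trans. apply (norm_le_minus _ (U t' 0 x)).
  apply Rle_trans with (MT * norm x + (MT * c * t' + (MT * c * m) / (2 * b) * (exp (2 * b * t') - 1))).
  apply Rplus_le_compat.
  + apply HM; lra.
  + apply (norm_RInt_le_exp (fun tau => U t' tau (Gf tau (u tau))) t' _ (MT * c) (MT * c * m) (2 * b)); try lra.
    apply Hi. lra. intros tau Htau. eapply Rle_trans. apply HM; lra.
    assert (h := Hle tau ltac:(lra)).
    apply Rle_trans with (MT * (c * (1 + norm (u tau)))). apply Rmult_le_compat_l. lra. apply Hg; lra.
    assert (0 < MT * c) by (nra). nra.
  + replace (MT * c * m / (2 * b)) with (m / 2) by (unfold b; field; lra).
    assert (MT * c * t' <= MT * c * T) by (apply Rmult_le_compat_l; nra).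
    assert (0 < exp (2 * b * t')) by apply exp_pos. unfold a. nra.
- assert (exp (2 * b * t) <= exp (2 * b * T)) by (apply exp_le_compat; nra). unfold b, a in *. nra.
Qed.

End MildSolutions.

(** * The averaging principle *)

Lemma exp_bound_on (w T' t s : R) : 0 <= s <= t -> t <= T' ->
  exp (w * (t - s)) <= exp (Rabs w * Rabs T').
Proof.
intros Hs Ht. apply exp_le_compat.
pose proof (Rle_abs w). pose proof (Rle_abs T'). pose proof (Rabs_pos w).
apply Rle_trans with (Rabs w * (t - s)).
- destruct (Rle_dec 0 w). rewrite Rabs_right by lra. lra. rewrite Rabs_left by lra. nra.
- apply Rmult_le_compat_l; lra.
Qed.

Lemma lim_seq_threshold (lam : nat -> R) : is_lim_seq lam 0 -> forall e, 0 < e ->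
  exists N, forall n, (N <= n)%nat -> Rabs (lam n) < e.
Proof.
intros H e He. apply is_lim_seq_spec in H. destruct (H (mkposreal e He)) as [N HN].
exists N. intros n Hn. specialize (HN n Hn). simpl in HN. rewrite Rminus_0_r in HN. auto.
Qed.

Section Averaging.
Context {E : CompleteNormedModule R_AbsRing}.
Context (Rl : R -> R -> R -> E -> E) (Sh : R -> E -> E) (F : R -> E -> E) (Fh : E -> E) (M w c : R).
Hypothesis Hevo : forall lam, 0 < lam -> evolution_system (Rl lam).
Hypothesis HM : 1 <= M.
Hypothesis HA1 : forall lam t s x, 0 < lam -> 0 <= s <= t ->
  norm (Rl lam t s x) <= M * exp (w * (t - s)) * norm x.
Hypothesis HC0 : C0_semigroup Sh.
Hypothesis HA2 : forall (u : E) (T eps : R), 0 < T -> 0 < eps -> exists delta, 0 < delta /\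
  forall lam (v : E) t s, 0 < lam < delta -> norm (minus v u) < delta ->
    0 <= s <= t -> t <= T -> norm (minus (Rl lam t s v) (Sh (t - s) u)) < eps.
Hypothesis HF_cont : forall t (x : E), 0 <= t -> forall eps, 0 < eps -> exists delta, 0 < delta /\
  forall t' (y : E), 0 <= t' -> Rabs (t' - t) < delta -> norm (minus y x) < delta ->
    norm (minus (F t' y) (F t x)) < eps.
Hypothesis HF_lip : forall r, 0 < r -> exists L, forall t (x y : E), 0 <= t -> norm x <= r -> norm y <= r ->
  norm (minus (F t x) (F t y)) <= L * norm (minus x y).
Hypothesis Hc : 0 < c.
Hypothesis HF_growth : forall t (v : E), 0 <= t -> norm (F t v) <= c * (1 + norm v).
Hypothesis HF_rel_compact : forall u : E, rel_compact (fun y => exists t, 0 <= t /\ y = F t u).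
Hypothesis HF_mean : forall (u : E) eps, 0 < eps -> exists T0 delta, 0 < delta /\
  forall T (v : E) h, T0 < T -> 0 < T -> norm (minus v u) < delta -> 0 < h ->
    norm (minus (scal (/ T) (RInt (fun tau => F (tau + h) v) 0 T)) (Fh u)) < eps.

Definition MT (T : R) := M * exp (Rabs w * Rabs T).

Lemma MT_pos T : 0 < MT T.
Proof. unfold MT. assert (0 < exp (Rabs w * Rabs T)) by apply exp_pos. nra. Qed.

Lemma Rl_bound T lam t s x : 0 < lam -> 0 <= s <= t -> t <= T ->
  norm (Rl lam t s x) <= MT T * norm x.
Proof.
intros Hl Hs Ht. eapply Rle_trans. apply HA1; auto. apply Rmult_le_compat_r. apply norm_ge_0.
unfold MT. apply Rmult_le_compat_l. lra. apply exp_bound_on; auto.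
Qed.

(* (A1) passes to the limit in (A2). *)
Lemma Sh_bound_exp h x : 0 <= h -> norm (Sh h x) <= M * exp (w * h) * norm x.
Proof.
intros Hh. apply Rle_of_lt_eps. intros eta Heta.
destruct (HA2 x (h + 1) eta ltac:(lra) Heta) as [d [Hd H]].
assert (H1 := H (d / 2) x h 0 ltac:(lra) ltac:(rewrite norm_minus_self; lra) ltac:(lra) ltac:(lra)).
rewrite Rminus_0_r in H1.
eapply Rle_lt_trans. apply (norm_le_minus _ (Rl (d / 2) h 0 x)).
assert (H2 := HA1 (d / 2) h 0 x ltac:(lra) ltac:(lra)). rewrite Rminus_0_r in H2.
rewrite norm_minus_sym. lra.
Qed.

Lemma Sh_bound T t s x : 0 <= s <= t -> t <= T -> norm (Sh (t - s) x) <= MT T * norm x.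
Proof.
intros Hs Ht. eapply Rle_trans. apply Sh_bound_exp. lra. apply Rmult_le_compat_r. apply norm_ge_0.
unfold MT. apply Rmult_le_compat_l. lra. apply exp_bound_on; auto.
Qed.

Lemma Sh_bound0 T h y : 0 <= h <= T -> norm (Sh h y) <= MT T * norm y.
Proof. intros Hh. replace h with (h - 0) by ring. apply Sh_bound; lra. Qed.

Lemma Rl_bound_loc lam : 0 < lam -> forall T, exists MT', 0 < MT' /\
  forall t s x, 0 <= s <= t -> t <= T -> norm (Rl lam t s x) <= MT' * norm x.
Proof. intros Hl T. exists (MT T). split. apply MT_pos. intros. apply Rl_bound; auto. Qed.

Lemma Sh_bound_loc T : exists MT', 0 < MT' /\
  forall t s x, 0 <= s <= t -> t <= T -> norm (Sh (t - s) x) <= MT' * norm x.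
Proof. exists (MT T). split. apply MT_pos. intros. apply Sh_bound; auto. Qed.

Lemma Rl_lin lam t s : 0 < lam -> 0 <= s <= t -> is_linear (Rl lam t s).
Proof. intros Hl Hs. apply is_linear_of_bounded. apply (proj1 (Hevo lam Hl)). auto. Qed.

Lemma Sh_lin h : 0 <= h -> is_linear (Sh h).
Proof. intros Hh. apply is_linear_of_bounded. apply (proj1 HC0). auto. Qed.

Lemma Rl_evol lam t s q y : 0 < lam -> 0 <= q <= s -> s <= t ->
  Rl lam t s (Rl lam s q y) = Rl lam t q y.
Proof. intros Hl. apply (proj1 (proj2 (proj2 (Hevo lam Hl)))). Qed.

Lemma Rl_cont lam : 0 < lam -> forall x t s, 0 <= s <= t -> forall eps, 0 < eps -> exists d, 0 < d /\
  forall t' s', 0 <= s' <= t' -> Rabs (t' - t) < d -> Rabs (s' - s) < d ->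
    norm (minus (Rl lam t' s' x) (Rl lam t s x)) < eps.
Proof. intros Hl. destruct (Hevo lam Hl) as [_ [_ [_ H]]]. intros x t s Hs. apply H; auto. Qed.

(* Joint continuity of S(t - s) is inherited from that of the R^(lam) through (A2). *)
Lemma Sh_cont : forall x t s, 0 <= s <= t -> forall eps, 0 < eps -> exists d, 0 < d /\
  forall t' s', 0 <= s' <= t' -> Rabs (t' - t) < d -> Rabs (s' - s) < d ->
    norm (minus (Sh (t' - s') x) (Sh (t - s) x)) < eps.
Proof.
intros x t s Hs eps He.
destruct (HA2 x (t + 1) (eps / 3) ltac:(lra) ltac:(lra)) as [d [Hd H]].
destruct (Rl_cont (d / 2) ltac:(lra) x t s Hs (eps / 3) ltac:(lra)) as [d2 [Hd2 H2]].
exists (Rmin d2 1). split. apply Rmin_pos; lra. intros t' s' Hs' Ht' Hss'.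
assert (Ht1 : Rabs (t' - t) < 1) by (eapply Rlt_le_trans; [apply Ht'| apply Rmin_r]).
apply Rabs_def2 in Ht1.
assert (a1 := H (d / 2) x t' s' ltac:(lra) ltac:(rewrite norm_minus_self; lra) Hs' ltac:(lra)).
assert (a2 := H (d / 2) x t s ltac:(lra) ltac:(rewrite norm_minus_self; lra) Hs ltac:(lra)).
assert (a3 := H2 t' s' Hs' ltac:(eapply Rlt_le_trans; [apply Ht'| apply Rmin_l])
                 ltac:(eapply Rlt_le_trans; [apply Hss'| apply Rmin_l])).
eapply Rle_lt_trans. apply (norm_minus_triangle _ (Rl (d / 2) t' s' x)).
eapply Rle_lt_trans. apply Rplus_le_compat_l. apply (norm_minus_triangle _ (Rl (d / 2) t s x)).
rewrite (norm_minus_sym _ (Rl (d / 2) t' s' x)). lra.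
Qed.

Lemma F_rescaled_cont lam : 0 < lam -> forall t (x : E), 0 <= t -> forall eps, 0 < eps ->
  exists d, 0 < d /\ forall t' y, 0 <= t' -> Rabs (t' - t) < d -> norm (minus y x) < d ->
    norm (minus (F (t' / lam) y) (F (t / lam) x)) < eps.
Proof.
intros Hl t0 x Ht0 eps He.
destruct (HF_cont (t0 / lam) x ltac:(apply Rdiv_le_0_compat; lra) eps He) as [d [Hd Hf]].
exists (Rmin d (d * lam)). split. apply Rmin_pos; nra. intros t' y Ht' Htt Hy.
apply Hf. apply Rdiv_le_0_compat; lra.
- replace (t' / lam - t0 / lam) with ((t' - t0) / lam) by (field; lra).
  unfold Rdiv. rewrite Rabs_mult, Rabs_inv, (Rabs_right lam) by lra.
  apply Rmult_lt_reg_r with lam. lra. rewrite Rmult_assoc, Rinv_l, Rmult_1_r by lra.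
  eapply Rlt_le_trans. apply Htt. rewrite Rmult_comm. apply Rmin_r.
- eapply Rlt_le_trans. apply Hy. apply Rmin_l.
Qed.

Lemma ex_RInt_F_shift (h T : R) (x : E) : 0 < h -> 0 <= T -> ex_RInt (fun s => F (s + h) x) 0 T.
Proof.
intros Hh HT. apply ex_RInt_continuous. intros z Hz. rewrite Rmin_left, Rmax_right in Hz by lra.
apply continuous_of_eps. intros eps He. destruct (HF_cont (z + h) x ltac:(lra) eps He) as [d [Hd Hf]].
exists (Rmin d h). split. apply Rmin_pos; lra. intros y Hy.
assert (Hy1 : Rabs (y - z) < d) by (eapply Rlt_le_trans; [apply Hy| apply Rmin_l]).
assert (Hy2 : Rabs (y - z) < h) by (eapply Rlt_le_trans; [apply Hy| apply Rmin_r]).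
apply Rabs_def2 in Hy2.
apply Hf. lra. replace (y + h - (z + h)) with (y - z) by ring. auto. rewrite norm_minus_self. auto.
Qed.

Definition F_mean (x : E) (T : R) : E := scal (/ T) (RInt (fun tau => F (tau + 1) x) 0 T).

Lemma F_mean_close x eta : 0 < eta ->
  exists T0, 0 < T0 /\ forall T, T0 <= T -> norm (minus (F_mean x T) (Fh x)) < eta.
Proof.
intros Heta. destruct (HF_mean x eta Heta) as [T0 [del [Hdel H]]].
exists (Rabs T0 + 1). split. pose proof (Rabs_pos T0). lra.
intros T HT. pose proof (Rle_abs T0). pose proof (Rabs_pos T0).
apply H; try lra. rewrite norm_minus_self. lra.
Qed.

Lemma norm_F_mean_le (x : E) T K : 0 < T ->
  (forall s, 0 <= s -> norm (F s x) <= K) -> norm (F_mean x T) <= K.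
Proof.
intros HT HK. unfold F_mean. eapply Rle_trans. apply norm_scal_R.
rewrite Rabs_right by (left; apply Rinv_0_lt_compat; lra).
apply Rle_trans with (/ T * ((T - 0) * K)); [|right; field; lra].
apply Rmult_le_compat_l. left; apply Rinv_0_lt_compat; lra.
eapply norm_RInt_le_const. lra.
- apply RInt_correct, ex_RInt_F_shift; lra.
- intros s Hs. apply HK. lra.
Qed.

Lemma norm_F_mean_minus_le (x y : E) T K : 0 < T ->
  (forall s, 0 <= s -> norm (minus (F s x) (F s y)) <= K) ->
  norm (minus (F_mean x T) (F_mean y T)) <= K.
Proof.
intros HT HK. unfold F_mean. eapply Rle_trans. apply norm_scal_minus.
rewrite Rabs_right by (left; apply Rinv_0_lt_compat; lra).
apply Rle_trans with (/ T * ((T - 0) * K)); [|right; field; lra].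
apply Rmult_le_compat_l. left; apply Rinv_0_lt_compat; lra.
eapply norm_RInt_le_const. lra.
- apply (is_RInt_minus (fun tau => F (tau + 1) x) (fun tau => F (tau + 1) y));
    apply RInt_correct, ex_RInt_F_shift; lra.
- intros s Hs. apply HK. lra.
Qed.

Lemma Fh_growth (v : E) : norm (Fh v) <= c * (1 + norm v).
Proof.
apply Rle_of_lt_eps. intros eta Heta.
destruct (F_mean_close v eta Heta) as [T0 [HT0 H]].
eapply Rle_lt_trans. apply (norm_le_minus _ (F_mean v T0)). rewrite norm_minus_sym.
apply Rplus_le_lt_compat; [|apply H; lra].
apply norm_F_mean_le. lra. intros s Hs. apply HF_growth. lra.
Qed.

(* The Lipschitz bound of F on a ball passes to the ergodic means, hence to Fh. *)
Lemma Fh_lip r : 0 < r -> exists L, 0 < L /\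
  (forall t (x y : E), 0 <= t -> norm x <= r -> norm y <= r ->
     norm (minus (F t x) (F t y)) <= L * norm (minus x y)) /\
  (forall (x y : E), norm x <= r -> norm y <= r -> norm (minus (Fh x) (Fh y)) <= L * norm (minus x y)).
Proof.
intros Hr. destruct (Gf_lip_pos F HF_lip r Hr) as [L [HL HLF]].
exists L. split; auto. split; auto. intros x y Hx Hy. apply Rle_of_lt_eps. intros eta Heta.
destruct (F_mean_close x (eta / 2) ltac:(lra)) as [T0 [HT0 H0]].
destruct (F_mean_close y (eta / 2) ltac:(lra)) as [T1 [HT1 H1]].
set (T := T0 + T1).
assert (hx := H0 T ltac:(unfold T; lra)). assert (hy := H1 T ltac:(unfold T; lra)).
assert (hxy : norm (minus (F_mean x T) (F_mean y T)) <= L * norm (minus x y)).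
{ apply norm_F_mean_minus_le. unfold T; lra. intros s Hs. apply HLF; auto. }
rewrite norm_minus_sym in hx.
eapply Rle_lt_trans. apply (norm_minus_triangle _ (F_mean x T)).
eapply Rle_lt_trans. apply Rplus_le_compat_l. apply (norm_minus_triangle _ (F_mean y T)).
lra.
Qed.

Lemma Fh_cont (x : E) eps : 0 < eps -> exists d, 0 < d /\ forall y, norm (minus y x) < d ->
  norm (minus (Fh y) (Fh x)) < eps.
Proof.
intros He. destruct (Fh_lip (norm x + 1) ltac:(pose proof (norm_ge_0 x); lra)) as [L [HL [_ Hl]]].
exists (Rmin 1 (eps / L)). split. apply Rmin_pos. lra. apply Rdiv_lt_0_compat; lra.
intros y Hy. eapply Rle_lt_trans. apply Hl.
- eapply Rle_trans. apply (norm_le_minus _ x).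
  assert (norm (minus y x) < 1) by (eapply Rlt_le_trans; [apply Hy| apply Rmin_l]). lra.
- lra.
- apply Rlt_le_trans with (L * (eps / L)). apply Rmult_lt_compat_l. lra.
  eapply Rlt_le_trans. apply Hy. apply Rmin_r. right. field. lra.
Qed.

Definition averaged_solution (u0 : E) : R -> E := picard_lim (fun t s => Sh (t - s)) (fun _ => Fh) u0.

Definition rescaled_solution (lam : R) (x : E) : R -> E :=
  picard_lim (Rl lam) (fun tau => F (tau / lam)) x.

Lemma averaged_solution_mild (u0 : E) :
  mild (fun t s => Sh (t - s)) (fun _ => Fh) u0 (averaged_solution u0).
Proof.
apply picard_lim_mild.
- intros t s Hs. apply Sh_lin. lra.
- apply Sh_bound_loc.
- apply Sh_cont.
- intros t x _ eps He. destruct (Fh_cont x eps He) as [d [Hd H]]. exists d. split; auto.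
- intros r Hr. destruct (Fh_lip r Hr) as [L [_ [_ H]]]. exists L. auto.
- exists c. split; auto. intros; apply Fh_growth.
Qed.

Lemma rescaled_solution_mild lam (x : E) : 0 < lam ->
  mild (Rl lam) (fun tau => F (tau / lam)) x (rescaled_solution lam x).
Proof.
intros Hl. apply picard_lim_mild.
- intros t s. apply Rl_lin; auto.
- apply Rl_bound_loc; auto.
- apply Rl_cont; auto.
- apply F_rescaled_cont; auto.
- intros r Hr. destruct (HF_lip r Hr) as [L HL]. exists L. intros t y z Ht Hy Hz.
  apply HL; auto. apply Rdiv_le_0_compat; lra.
- exists c. split; auto. intros t v Ht. apply HF_growth. apply Rdiv_le_0_compat; lra.
Qed.

Lemma Sh_strong_cont (y : E) eps : 0 < eps ->
  exists d, 0 < d /\ forall h, 0 <= h < d -> norm (minus (Sh h y) y) < eps.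
Proof. apply (proj2 (proj2 (proj2 HC0))). Qed.

Lemma Sh_semigroup t s y : 0 <= t -> 0 <= s -> Sh (t + s) y = Sh t (Sh s y).
Proof. apply (proj1 (proj2 (proj2 HC0))). Qed.

Lemma is_RInt_F_rescale (lam a d : R) (x : E) (I : E) : 0 < lam ->
  is_RInt (fun s => F (s + a / lam) x) 0 (d / lam) I ->
  is_RInt (fun tau => F (tau / lam) x) a (a + d) (scal lam I).
Proof.
intros Hlam HI.
assert (H1 : is_RInt (fun s => F (s + a / lam) x)
               (/ lam * a + - (a / lam)) (/ lam * (a + d) + - (a / lam)) I).
{ replace (/ lam * a + - (a / lam)) with 0 by (field; lra).
  replace (/ lam * (a + d) + - (a / lam)) with (d / lam) by (field; lra). exact HI. }
apply is_RInt_comp_lin in H1. apply (is_RInt_scal _ _ _ lam) in H1.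
eapply is_RInt_ext. 2: exact H1. intros tau _. cbv beta.
rewrite scal_assoc. replace (mult lam (/ lam)) with 1 by (unfold mult; simpl; field; lra).
transitivity (F (/ lam * tau + - (a / lam) + a / lam) x).
- apply (scal_one (K:=R_Ring) (V:=E)).
- f_equal. field. lra.
Qed.

(* As lam -> 0 the window d/lam of the ergodic mean grows, uniformly in the shift. *)
Lemma F_mean_window_threshold (x : E) (d th : R) : 0 < d -> 0 < th ->
  exists l, 0 < l /\ forall lam, 0 < lam < l -> forall h, 0 < h ->
    norm (minus (scal (/ (d / lam)) (RInt (fun s => F (s + h) x) 0 (d / lam))) (Fh x)) <= th.
Proof.
intros Hd Hth. destruct (HF_mean x th Hth) as [T0 [del [Hdel Hav]]].
pose proof (Rabs_pos T0). pose proof (Rle_abs T0).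
exists (d / (Rabs T0 + 1)). split. apply Rdiv_lt_0_compat; lra.
intros lam [Hlam Hlam2] h Hh. left. apply Hav; auto.
- apply Rmult_lt_compat_r with (r := Rabs T0 + 1) in Hlam2; [|lra].
  replace (d / (Rabs T0 + 1) * (Rabs T0 + 1)) with d in Hlam2 by (field; lra).
  apply Rmult_lt_reg_r with lam. lra.
  unfold Rdiv. rewrite Rmult_assoc, Rinv_l, Rmult_1_r by lra. nra.
- apply Rdiv_lt_0_compat; lra.
- rewrite norm_minus_self; auto.
Qed.

Section AlongSolution.
Context (u : R -> E) (T r L M1 : R).
Hypothesis HT : 0 < T.
Hypothesis HM1 : 0 < M1.
Hypothesis HL : 0 < L.
Hypothesis HR_boundT : forall lam t s y, 0 < lam -> 0 <= s <= t -> t <= T ->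
  norm (Rl lam t s y) <= M1 * norm y.
Hypothesis HS_boundT : forall h y, 0 <= h <= T -> norm (Sh h y) <= M1 * norm y.
Hypothesis HF_lip_r : forall t (x y : E), 0 <= t -> norm x <= r -> norm y <= r ->
  norm (minus (F t x) (F t y)) <= L * norm (minus x y).
Hypothesis HFh_lip_r : forall (x y : E), norm x <= r -> norm y <= r ->
  norm (minus (Fh x) (Fh y)) <= L * norm (minus x y).
Hypothesis Hu : continuous_nonneg u.
Hypothesis Hu_bound : forall s, 0 <= s <= T -> norm (u s) <= r.

Definition nonlinear_values (y : E) :=
  (exists s tau, 0 <= s /\ 0 <= tau <= T /\ y = F s (u tau)) \/
  (exists tau, 0 <= tau <= T /\ y = Fh (u tau)).

Lemma Fh_u_cont : cont_on (fun s => Fh (u s)) 0 T.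
Proof.
intros t Ht eps He.
destruct (Hu t (proj1 Ht) (eps / L) ltac:(apply Rdiv_lt_0_compat; lra)) as [d [Hd Hud]].
exists d. split; auto. intros s Hs Hst. eapply Rle_lt_trans. { apply HFh_lip_r; apply Hu_bound; lra. }
assert (h := Hud s (proj1 Hs) Hst).
apply Rmult_lt_compat_l with (r := L) in h; [|lra].
replace (L * (eps / L)) with eps in h by (field; lra). auto.
Qed.

(* The values F(s, u(tau)) are uniformly close to F(s, u(k d)) for a grid point
   k d, and each orbit {F(s, x) | s >= 0} is relatively compact by (A4). *)
Lemma nonlinear_values_totally_bounded : totally_bounded nonlinear_values.
Proof.
apply totally_bounded_union.
- apply totally_bounded_approx. intros eps He.
  destruct (cont_on_uniform u 0 T (cont_on_of_nonneg u T Hu) (eps / (L + 1))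
              ltac:(apply Rdiv_lt_0_compat; lra)) as [d [Hd Hud]].
  destruct (interval_grid 0 T d ltac:(lra) Hd) as [N HN].
  exists (fun y => exists i, In i (seq 0 (S N)) /\
                    (fun i y => exists t, 0 <= t /\ y = F t (u (0 + INR i * d))) i y).
  split.
  + apply totally_bounded_list_union. intros i _.
    apply totally_bounded_of_rel_compact. apply HF_rel_compact.
  + intros y [s [tau [Hs [Htau ->]]]]. destruct (HN tau Htau) as [k [Hk [H1 H2]]].
    exists (F s (u (0 + INR k * d))). split.
    * exists k. split. apply in_seq. lia. exists s. split; auto.
    * assert (0 <= 0 + INR k * d) by (pose proof (pos_INR k); nra).
      eapply Rle_lt_trans. { apply HF_lip_r; auto; apply Hu_bound; lra. }
      assert (h := Hud tau (0 + INR k * d) Htau ltac:(lra) ltac:(rewrite Rabs_right; lra)).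
      apply Rle_lt_trans with (L * (eps / (L + 1))). apply Rmult_le_compat_l; lra.
      apply Rlt_le_trans with ((L + 1) * (eps / (L + 1))).
      apply Rmult_lt_compat_r. apply Rdiv_lt_0_compat; lra. lra.
      right. field. lra.
- apply totally_bounded_image. lra. apply Fh_u_cont.
Qed.

(* Near-identity holds on a finite eps-net by (A2) and strong continuity, hence
   on the whole totally bounded set. *)
Lemma propagators_near_identity rho : 0 < rho -> exists d, 0 < d /\ exists lam0, 0 < lam0 /\
  forall lam y b tau, 0 < lam < lam0 -> nonlinear_values y -> 0 <= tau <= b -> b <= T -> b - tau < d ->
    norm (minus (Rl lam b tau y) y) <= rho /\ norm (minus (Sh (b - tau) y) y) <= rho.
Proof.
intros Hrho. set (e0 := rho / (3 * (M1 + 1))).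
assert (He0 : 0 < e0) by (unfold e0; apply Rdiv_lt_0_compat; lra).
assert (He0' : (M1 + 1) * e0 = rho / 3) by (unfold e0; field; lra).
destruct (nonlinear_values_totally_bounded e0 He0) as [l Hl].
destruct (list_min_threshold l (fun z d => forall h, 0 <= h < d ->
            norm (minus (Sh h z) z) < rho / 3)) as [d1 [Hd1 P1]].
{ intros z d d' Hd' H h Hh. apply H. lra. }
{ intros z _. apply Sh_strong_cont. lra. }
destruct (list_min_threshold l (fun z d => forall lam t s, 0 < lam < d -> 0 <= s <= t -> t <= T ->
            norm (minus (Rl lam t s z) (Sh (t - s) z)) < rho / 3)) as [d2 [Hd2 P2]].
{ intros z d d' Hd' H lam t s Hlam Hs Ht. apply H; auto. lra. }
{ intros z _. destruct (HA2 z T (rho / 3) HT ltac:(lra)) as [del [Hdel Hdd]].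
  exists del. split; auto. intros lam t s Hlam Hs Ht. apply Hdd; auto. rewrite norm_minus_self. auto. }
exists d1. split; auto. exists d2. split; auto.
intros lam y b tau Hlam Hy Htau Hb Hbt.
destruct (Hl y Hy) as [z [Hz Hyz]].
assert (Hsh := P1 z Hz (b - tau) ltac:(lra)).
assert (Hr := P2 z Hz lam b tau Hlam Htau Hb).
assert (HlinR : is_linear (Rl lam b tau)) by (apply Rl_lin; lra).
assert (HlinS : is_linear (Sh (b - tau))) by (apply Sh_lin; lra).
assert (Hny : norm (minus (Rl lam b tau y) (Rl lam b tau z)) <= M1 * e0).
{ rewrite <- (linear_minus (K:=R_AbsRing) (U:=E) (V:=E)) by auto.
  eapply Rle_trans. apply HR_boundT; lra. apply Rmult_le_compat_l. lra. left; apply Hyz. }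
assert (Hsy : norm (minus (Sh (b - tau) y) (Sh (b - tau) z)) <= M1 * e0).
{ rewrite <- (linear_minus (K:=R_AbsRing) (U:=E) (V:=E)) by auto.
  eapply Rle_trans. apply HS_boundT; lra. apply Rmult_le_compat_l. lra. left; apply Hyz. }
assert (Hyz' : norm (minus z y) < e0) by (rewrite norm_minus_sym; apply Hyz).
split.
- eapply Rle_trans. apply (norm_minus_triangle _ (Rl lam b tau z)).
  eapply Rle_trans. apply Rplus_le_compat_l. apply (norm_minus_triangle _ (Sh (b - tau) z)).
  eapply Rle_trans. apply Rplus_le_compat_l. apply Rplus_le_compat_l. apply (norm_minus_triangle _ z).
  lra.
- eapply Rle_trans. apply (norm_minus_triangle _ (Sh (b - tau) z)).
  eapply Rle_trans. apply Rplus_le_compat_l. apply (norm_minus_triangle _ z).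
  lra.
Qed.

Lemma forced_piece_freeze lam t a b x l1 I om rho :
  0 < lam -> 0 < a <= b -> b <= t -> t <= T -> x = u a ->
  (forall tau, a <= tau <= b -> norm (minus (u tau) x) <= om) ->
  (forall y tau, nonlinear_values y -> a <= tau <= b -> norm (minus (Rl lam b tau y) y) <= rho) ->
  is_RInt (fun tau => Rl lam t tau (F (tau / lam) (u tau))) a b l1 ->
  is_RInt (fun tau => F (tau / lam) x) a b I ->
  norm (minus l1 (Rl lam t b I)) <= (b - a) * (M1 * L * om + M1 * rho).
Proof.
intros Hlam Hab Hbt HtT Hx Hom Hrho Hl1 HI.
assert (Hxr : norm x <= r) by (rewrite Hx; apply Hu_bound; lra).
assert (HlinRb : is_linear (Rl lam t b)) by (apply Rl_lin; lra).
eapply norm_RInt_le_const. lra.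
apply (is_RInt_minus _ _ _ _ _ _ Hl1 (is_RInt_linear (Rl lam t b) _ _ _ _ HlinRb HI)).
intros tau Htau. cbv beta.
assert (HlinRt : is_linear (Rl lam t tau)) by (apply Rl_lin; lra).
eapply Rle_trans. apply (norm_minus_triangle _ (Rl lam t tau (F (tau / lam) x))).
apply Rplus_le_compat.
- rewrite <- (linear_minus (K:=R_AbsRing) (U:=E) (V:=E)) by auto.
  eapply Rle_trans. apply HR_boundT; lra.
  rewrite Rmult_assoc. apply Rmult_le_compat_l. lra.
  eapply Rle_trans. apply HF_lip_r; auto. apply Rdiv_le_0_compat; lra. apply Hu_bound; lra.
  apply Rmult_le_compat_l. lra. apply Hom. auto.
- rewrite <- (Rl_evol lam t b tau) by lra.
  rewrite <- (linear_minus (K:=R_AbsRing) (U:=E) (V:=E)) by auto.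
  eapply Rle_trans. apply HR_boundT; lra.
  apply Rmult_le_compat_l. lra. apply (Hrho (F (tau / lam) x) tau); auto.
  left. exists (tau / lam), a. split. apply Rdiv_le_0_compat; lra. split. lra. rewrite Hx; auto.
Qed.

Lemma averaged_piece_freeze t a b x l2 om rho :
  0 < a <= b -> b <= t -> t <= T -> x = u a ->
  (forall tau, a <= tau <= b -> norm (minus (u tau) x) <= om) ->
  (forall y tau, nonlinear_values y -> a <= tau <= b -> norm (minus (Sh (b - tau) y) y) <= rho) ->
  is_RInt (fun tau => Sh (t - tau) (Fh (u tau))) a b l2 ->
  norm (minus (scal (b - a) (Sh (t - b) (Fh x))) l2) <= (b - a) * (M1 * rho + M1 * L * om).
Proof.
intros Hab Hbt HtT Hx Hom Hrho Hl2.
assert (Hxr : norm x <= r) by (rewrite Hx; apply Hu_bound; lra).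
eapply norm_RInt_le_const. lra.
apply (is_RInt_minus _ _ _ _ _ _ (is_RInt_const a b (Sh (t - b) (Fh x))) Hl2).
intros tau Htau. cbv beta.
assert (HlinS : is_linear (Sh (t - tau))) by (apply Sh_lin; lra).
eapply Rle_trans. apply (norm_minus_triangle _ (Sh (t - tau) (Fh x))). apply Rplus_le_compat.
- replace (t - tau) with ((t - b) + (b - tau)) by ring. rewrite Sh_semigroup by lra.
  assert (HlinS' : is_linear (Sh (t - b))) by (apply Sh_lin; lra).
  rewrite <- (linear_minus (K:=R_AbsRing) (U:=E) (V:=E)) by auto.
  eapply Rle_trans. apply HS_boundT; lra.
  apply Rmult_le_compat_l. lra. eapply Rle_trans. right. apply norm_minus_sym. apply (Hrho (Fh x) tau); auto.
  right. exists a. split. lra. rewrite Hx; auto.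
- rewrite <- (linear_minus (K:=R_AbsRing) (U:=E) (V:=E)) by auto.
  eapply Rle_trans. apply HS_boundT; lra.
  rewrite Rmult_assoc. apply Rmult_le_compat_l. lra.
  eapply Rle_trans. apply HFh_lip_r. auto. apply Hu_bound; lra.
  apply Rmult_le_compat_l. lra. eapply Rle_trans. right. apply norm_minus_sym. apply Hom. auto.
Qed.

(* On [a, a + d], freeze u at x = u(a) and move R(t, tau), S(t - tau) to
   R(t, a + d), S(t - a - d); the frozen forced integral is d times an ergodic
   mean of F(., x) over a window of length d/lam. *)
Lemma averaging_gap_piece lam t a d x l1 l2 om rho th ka :
  0 < lam -> 0 < a -> 0 < d -> a + d <= t -> t <= T -> x = u a ->
  (forall tau, a <= tau <= a + d -> norm (minus (u tau) x) <= om) ->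
  (forall y tau, nonlinear_values y -> a <= tau <= a + d ->
     norm (minus (Rl lam (a + d) tau y) y) <= rho /\ norm (minus (Sh (a + d - tau) y) y) <= rho) ->
  norm (minus (scal (/ (d / lam)) (RInt (fun s => F (s + a / lam) x) 0 (d / lam))) (Fh x)) <= th ->
  norm (minus (Rl lam t (a + d) (Fh x)) (Sh (t - (a + d)) (Fh x))) <= ka ->
  is_RInt (fun tau => Rl lam t tau (F (tau / lam) (u tau))) a (a + d) l1 ->
  is_RInt (fun tau => Sh (t - tau) (Fh (u tau))) a (a + d) l2 ->
  norm (minus l1 l2) <= d * (2 * (M1 * L * om) + 2 * (M1 * rho) + M1 * th + ka).
Proof.
intros Hlam Ha Hd Hadt HtT Hx Hom Hrho Hth Hka Hl1 Hl2.
set (b := a + d) in *.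
set (Iavg := RInt (fun s => F (s + a / lam) x) 0 (d / lam)).
assert (HI : is_RInt (fun s => F (s + a / lam) x) 0 (d / lam) Iavg).
{ apply RInt_correct, ex_RInt_F_shift; [|left]; apply Rdiv_lt_0_compat; lra. }
assert (HQ := is_RInt_F_rescale lam a d x Iavg Hlam HI). fold b in HQ.
assert (N1 := forced_piece_freeze lam t a b x l1 (scal lam Iavg) om rho Hlam ltac:(unfold b; lra)
                Hadt HtT Hx Hom (fun y tau Hy Htau => proj1 (Hrho y tau Hy Htau)) Hl1 HQ).
assert (N3 := averaged_piece_freeze t a b x l2 om rho ltac:(unfold b; lra) Hadt HtT Hx Hom
                (fun y tau Hy Htau => proj2 (Hrho y tau Hy Htau)) Hl2).
set (avg := scal (/ (d / lam)) Iavg) in *.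
assert (Havg : scal lam Iavg = scal d avg).
{ unfold avg. rewrite scal_assoc. f_equal. unfold mult; simpl. field; lra. }
assert (Hba : b - a = d) by (unfold b; ring).
assert (N2 : norm (minus (Rl lam t b (scal lam Iavg)) (scal (b - a) (Sh (t - b) (Fh x))))
               <= d * (M1 * th + ka)).
{ assert (HlinRb : is_linear (Rl lam t b)) by (apply Rl_lin; unfold b in *; lra).
  rewrite Havg, Hba. rewrite (linear_scal (K:=R_AbsRing) (U:=E) (V:=E) (Rl lam t b) HlinRb).
  eapply Rle_trans. apply norm_scal_minus. rewrite Rabs_right by lra. apply Rmult_le_compat_l. lra.
  eapply Rle_trans. apply (norm_minus_triangle _ (Rl lam t b (Fh x))). apply Rplus_le_compat; auto.
  rewrite <- (linear_minus (K:=R_AbsRing) (U:=E) (V:=E)) by auto.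
  eapply Rle_trans. apply HR_boundT; unfold b in *; lra. apply Rmult_le_compat_l. lra. exact Hth. }
eapply Rle_trans. right.
  apply (f_equal norm
    ((@minus_trans3 E) l1 l2 (Rl lam t b (scal lam Iavg)) (scal (b - a) (Sh (t - b) (Fh x))))).
eapply Rle_trans. apply norm_plus_le. eapply Rle_trans. apply Rplus_le_compat_r. apply norm_plus_le.
apply Rle_trans with ((b - a) * (M1 * L * om + M1 * rho) + d * (M1 * th + ka)
                     + (b - a) * (M1 * rho + M1 * L * om)).
- apply Rplus_le_compat; [apply Rplus_le_compat|]; assumption.
- rewrite Hba. right. ring.
Qed.

Lemma ex_RInt_forced lam t : 0 < lam -> 0 <= t ->
  ex_RInt (fun tau => Rl lam t tau (F (tau / lam) (u tau))) 0 t.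
Proof.
intros Hlam Ht. eexists.
apply (is_RInt_U (Rl lam) (fun t s H => Rl_lin lam t s Hlam H) (Rl_bound_loc lam Hlam)
         (Rl_cont lam Hlam) (fun tau => F (tau / lam) (u tau))); auto.
apply (Gf_comp_cont (fun tau x => F (tau / lam) x) (F_rescaled_cont lam Hlam)); auto.
Qed.

Lemma ex_RInt_averaged t : 0 <= t -> ex_RInt (fun tau => Sh (t - tau) (Fh (u tau))) 0 t.
Proof.
intros Ht. eexists.
apply (is_RInt_U (fun t s => Sh (t - s)) (fun t s H => Sh_lin (t - s) ltac:(lra)) Sh_bound_loc Sh_cont
         (fun tau => Fh (u tau))); auto.
apply (Gf_comp_cont (fun _ x => Fh x)); auto.
intros t0 x Ht0 eps He. destruct (Fh_cont x eps He) as [d [Hd Hf]]. exists d. split; auto.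
Qed.

Definition averaging_gap lam t p q : E :=
  minus (RInt (fun tau => Rl lam t tau (F (tau / lam) (u tau))) p q)
        (RInt (fun tau => Sh (t - tau) (Fh (u tau))) p q).

Lemma averaging_gap_chasles lam t p q s : 0 < lam -> 0 <= p <= q -> q <= s -> s <= t ->
  averaging_gap lam t p s = plus (averaging_gap lam t p q) (averaging_gap lam t q s).
Proof.
intros Hl Hpq Hqs Hst. unfold averaging_gap.
assert (E1 := ex_RInt_forced lam t Hl ltac:(lra)). assert (E2 := ex_RInt_averaged t ltac:(lra)).
rewrite <- (RInt_Chasles (fun tau => Rl lam t tau (F (tau / lam) (u tau))) p q s),
        <- (RInt_Chasles (fun tau => Sh (t - tau) (Fh (u tau))) p q s).
- apply (@minus_plus_plus E).
- all: apply (ex_RInt_sub _ _ _ t); auto; lra.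
Qed.

Lemma averaging_gap_crude lam t p q : 0 < lam -> 0 <= p <= q -> q <= t -> t <= T ->
  norm (averaging_gap lam t p q) <= (q - p) * (2 * (M1 * (c * (1 + r)))).
Proof.
intros Hl Hpq Hqt HtT. unfold averaging_gap.
assert (E1 := ex_RInt_sub _ p q t Hpq Hqt (ex_RInt_forced lam t Hl ltac:(lra))).
assert (E2 := ex_RInt_sub _ p q t Hpq Hqt (ex_RInt_averaged t ltac:(lra))).
eapply norm_RInt_le_const. lra.
apply (is_RInt_minus _ _ _ _ _ _ (RInt_correct _ _ _ E1) (RInt_correct _ _ _ E2)).
intros tau Htau. cbv beta.
eapply Rle_trans. apply norm_minus_le_plus.
assert (norm (u tau) <= r) by (apply Hu_bound; lra).
replace (2 * (M1 * (c * (1 + r)))) with (M1 * (c * (1 + r)) + M1 * (c * (1 + r))) by ring.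
apply Rplus_le_compat.
- eapply Rle_trans. apply HR_boundT; lra. apply Rmult_le_compat_l. lra.
  eapply Rle_trans. apply HF_growth. apply Rdiv_le_0_compat; lra. apply Rmult_le_compat_l; lra.
- eapply Rle_trans. apply HS_boundT; lra. apply Rmult_le_compat_l. lra.
  eapply Rle_trans. apply Fh_growth. apply Rmult_le_compat_l; lra.
Qed.

Lemma averaging_gap_telescope lam t d e : 0 < lam -> 0 < d ->
  (forall j, (1 <= j)%nat -> INR j * d + d <= t ->
     norm (averaging_gap lam t (INR j * d) (INR j * d + d)) <= d * e) ->
  forall j, (1 <= j)%nat -> INR j * d <= t ->
    norm (averaging_gap lam t d (INR j * d)) <= (INR j - 1) * d * e.
Proof.
intros Hl Hd Hpc. induction j as [|j IH]; intros Hj Hjt. lia.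
destruct (Nat.eq_dec j 0) as [->|Hj0].
- simpl. unfold averaging_gap. rewrite Rmult_1_l, !RInt_point, norm_minus_self. lra.
- rewrite S_INR in *.
  assert (Hj1 : 1 <= INR j) by (replace 1 with (INR 1) by reflexivity; apply le_INR; lia).
  rewrite (averaging_gap_chasles lam t d (INR j * d) ((INR j + 1) * d)); [|lra|nra|nra|lra].
  eapply Rle_trans. apply norm_plus_le.
  replace ((INR j + 1) * d) with (INR j * d + d) by ring.
  eapply Rle_trans. apply Rplus_le_compat. apply IH; [lia|lra]. apply Hpc; [lia|lra].
  right. ring.
Qed.

Lemma averaging_gap_of_pieces lam t d e : 0 < lam -> 0 <= t <= T -> 0 < d -> 0 <= e ->
  (forall j, (1 <= j)%nat -> INR j * d + d <= t ->
     norm (averaging_gap lam t (INR j * d) (INR j * d + d)) <= d * e) ->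
  norm (averaging_gap lam t 0 t) <= 2 * d * (2 * (M1 * (c * (1 + r)))) + T * e.
Proof.
intros Hl Ht Hd He Hpc.
assert (Hr0 : 0 <= r) by (eapply Rle_trans; [apply (norm_ge_0 (u 0))| apply (Hu_bound 0); lra]).
set (K := 2 * (M1 * (c * (1 + r)))).
assert (HK : 0 < K) by (assert (0 < c * (1 + r)) by nra; unfold K; nra).
destruct (nfloor_ex (t / d) ltac:(apply Rdiv_le_0_compat; lra)) as [m [Hm1 Hm2]].
assert (Hmd : INR m * d <= t < INR m * d + d).
{ apply Rmult_le_compat_r with (r := d) in Hm1; [|lra].
  apply Rmult_lt_compat_r with (r := d) in Hm2; [|lra].
  unfold Rdiv in Hm1, Hm2. rewrite Rmult_assoc, Rinv_l, Rmult_1_r in Hm1, Hm2 by lra. lra. }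
destruct (Nat.eq_dec m 0) as [->|Hm0].
- simpl in Hmd. eapply Rle_trans. apply averaging_gap_crude; lra. fold K.
  assert (0 <= T * e) by nra. nra.
- assert (Hm1' : 1 <= INR m) by (replace 1 with (INR 1) by reflexivity; apply le_INR; lia).
  rewrite (averaging_gap_chasles lam t 0 d t); [| lra| lra| nra| lra].
  rewrite (averaging_gap_chasles lam t d (INR m * d) t); [| lra| nra| lra| lra].
  eapply Rle_trans. apply norm_plus_le. eapply Rle_trans. apply Rplus_le_compat_l. apply norm_plus_le.
  eapply Rle_trans. apply Rplus_le_compat.
  { apply averaging_gap_crude; nra. }
  apply Rplus_le_compat.
  { apply (averaging_gap_telescope lam t d e); auto; [lia|lra]. }
  { apply averaging_gap_crude; nra. }
  fold K.
  assert ((INR m - 1) * d * e <= T * e) by (apply Rmult_le_compat_r; nra).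
  assert ((t - INR m * d) * K <= d * K) by (apply Rmult_le_compat_r; nra).
  nra.
Qed.

Lemma grid_thresholds d th ka N : 0 < d -> 0 < th -> 0 < ka -> exists l, 0 < l /\
  forall k, (k <= N)%nat -> forall lam, 0 < lam < l ->
    (forall h, 0 < h ->
       norm (minus (scal (/ (d / lam)) (RInt (fun s => F (s + h) (u (INR k * d))) 0 (d / lam)))
                   (Fh (u (INR k * d)))) <= th) /\
    (forall t s, 0 <= s <= t -> t <= T ->
       norm (minus (Rl lam t s (Fh (u (INR k * d)))) (Sh (t - s) (Fh (u (INR k * d))))) <= ka).
Proof.
intros Hd Hth Hka.
destruct (list_min_threshold (seq 0 (S N)) (fun k l => forall lam, 0 < lam < l -> forall h, 0 < h ->
   norm (minus (scal (/ (d / lam)) (RInt (fun s => F (s + h) (u (INR k * d))) 0 (d / lam)))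
               (Fh (u (INR k * d)))) <= th)) as [l1 [Hl1 P1]].
{ intros z l l' Hl H lam Hlam. apply H. lra. }
{ intros k _. apply F_mean_window_threshold; auto. }
destruct (list_min_threshold (seq 0 (S N)) (fun k l => forall lam, 0 < lam < l -> forall t s,
   0 <= s <= t -> t <= T ->
   norm (minus (Rl lam t s (Fh (u (INR k * d)))) (Sh (t - s) (Fh (u (INR k * d))))) <= ka))
  as [l2 [Hl2 P2]].
{ intros z l l' Hl H lam Hlam. apply H. lra. }
{ intros k _. destruct (HA2 (Fh (u (INR k * d))) T ka HT Hka) as [del [Hdel Hd2]].
  exists del. split; auto. intros lam Hlam t s Hs Ht. left. apply Hd2; auto.
  rewrite norm_minus_self; auto. }
exists (Rmin l1 l2). split. apply Rmin_pos; auto.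
intros k Hk lam Hlam. assert (Hin : In k (seq 0 (S N))) by (apply in_seq; lia).
pose proof (Rmin_l l1 l2). pose proof (Rmin_r l1 l2).
split; [apply P1 | apply P2]; auto; lra.
Qed.

Lemma averaging_gap_pieces eta : 0 < eta -> exists d0, 0 < d0 /\ forall d, 0 < d < d0 ->
  exists lam0, 0 < lam0 /\ forall lam, 0 < lam < lam0 -> forall t, 0 <= t <= T ->
  forall j, (1 <= j)%nat -> INR j * d + d <= t ->
    norm (averaging_gap lam t (INR j * d) (INR j * d + d)) <= d * eta.
Proof.
intros Heta.
set (om := eta / (8 * (M1 * L))). set (rho := eta / (8 * M1)).
set (th := eta / (4 * M1)). set (ka := eta / 4).
assert (Hom : 0 < om) by (unfold om; apply Rdiv_lt_0_compat; nra).
assert (Hrho : 0 < rho) by (unfold rho; apply Rdiv_lt_0_compat; nra).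
assert (Hth : 0 < th) by (unfold th; apply Rdiv_lt_0_compat; nra).
assert (Hka : 0 < ka) by (unfold ka; lra).
assert (Hsum : 2 * (M1 * L * om) + 2 * (M1 * rho) + M1 * th + ka = eta).
{ unfold om, rho, th, ka. field. nra. }
destruct (cont_on_uniform u 0 T (cont_on_of_nonneg u T Hu) om Hom) as [du [Hdu Hud]].
destruct (propagators_near_identity rho Hrho) as [dr [Hdr [lamr [Hlamr Hus]]]].
exists (Rmin du dr). split. apply Rmin_pos; auto. intros d [Hd Hdd].
assert (Hddu : d < du) by (eapply Rlt_le_trans; [apply Hdd| apply Rmin_l]).
assert (Hddr : d < dr) by (eapply Rlt_le_trans; [apply Hdd| apply Rmin_r]).
destruct (nfloor_ex (T / d) ltac:(apply Rdiv_le_0_compat; lra)) as [Nd HNd].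
destruct (grid_thresholds d th ka Nd Hd Hth Hka) as [lg [Hlg Pg]].
exists (Rmin lamr lg). split. apply Rmin_pos; auto.
intros lam Hlam t Ht j Hj Hjt.
assert (Hlr : lam < lamr) by (eapply Rlt_le_trans; [apply Hlam| apply Rmin_l]).
assert (Hlam_g : lam < lg) by (eapply Rlt_le_trans; [apply Hlam| apply Rmin_r]).
assert (HjN : (j <= Nd)%nat).
{ assert (INR j <= T / d).
  { apply Rmult_le_reg_r with d; auto. unfold Rdiv; rewrite Rmult_assoc, Rinv_l, Rmult_1_r by lra. lra. }
  assert (INR j < INR Nd + 1) by lra. rewrite <- S_INR in H0. apply INR_lt in H0. lia. }
assert (Hj1 : 1 <= INR j) by (replace 1 with (INR 1) by reflexivity; apply le_INR; auto).
assert (E1 := ex_RInt_forced lam t ltac:(lra) ltac:(lra)).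
assert (E2 := ex_RInt_averaged t ltac:(lra)).
rewrite <- Hsum.
destruct (Pg j HjN lam ltac:(lra)) as [Pth Pka].
apply (averaging_gap_piece lam t (INR j * d) d (u (INR j * d))); auto; try nra.
- intros tau Htau. left. apply Hud; try split; try nra. rewrite Rabs_right; lra.
- intros y tau Hy Htau. apply Hus; auto; try lra; split; nra.
- apply Pth. apply Rdiv_lt_0_compat; nra.
- apply Pka. split; nra. lra.
- apply RInt_correct. apply (ex_RInt_sub _ _ _ t); auto. split; nra.
- apply RInt_correct. apply (ex_RInt_sub _ _ _ t); auto. split; nra.
Qed.

Lemma averaging_gap_small eps : 0 < eps -> exists lam0, 0 < lam0 /\ forall lam, 0 < lam < lam0 ->
  forall t, 0 <= t <= T -> norm (averaging_gap lam t 0 t) <= eps.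
Proof.
intros He.
assert (Hr0 : 0 <= r) by (eapply Rle_trans; [apply (norm_ge_0 (u 0))| apply (Hu_bound 0); lra]).
set (K := 2 * (M1 * (c * (1 + r)))).
assert (HK : 0 < K) by (assert (0 < c * (1 + r)) by nra; unfold K; nra).
set (eta := eps / (2 * T)). assert (Heta : 0 < eta) by (unfold eta; apply Rdiv_lt_0_compat; lra).
destruct (averaging_gap_pieces eta Heta) as [d0 [Hd0 Hpieces]].
set (d := Rmin d0 (eps / (4 * K)) / 2).
assert (Hmin : 0 < Rmin d0 (eps / (4 * K))) by (apply Rmin_pos; auto; apply Rdiv_lt_0_compat; lra).
assert (Hd : 0 < d < d0) by (unfold d; pose proof (Rmin_l d0 (eps / (4 * K))); lra).
assert (HdK : 2 * d * K <= eps / 4).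
{ assert (d <= eps / (4 * K) / 2) by (unfold d; pose proof (Rmin_r d0 (eps / (4 * K))); lra).
  apply Rle_trans with (2 * (eps / (4 * K) / 2) * K). apply Rmult_le_compat_r; lra.
  right. field. lra. }
destruct (Hpieces d Hd) as [lam0 [Hlam0 Hpc]].
exists lam0. split; auto. intros lam Hlam t Ht.
eapply Rle_trans. apply (averaging_gap_of_pieces lam t d eta); try lra.
- intros j Hj Hjt. apply Hpc; auto.
- fold K. assert (T * eta = eps / 2) by (unfold eta; field; lra). lra.
Qed.

Lemma rescaled_minus_averaged_step (u0 : E) (v : R -> E) lam x al m t :
  mild (fun t s => Sh (t - s)) (fun _ => Fh) u0 u ->
  0 < lam -> mild (Rl lam) (fun tau => F (tau / lam)) x v ->
  (forall s, 0 <= s <= T -> norm (v s) <= r) ->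
  (forall s, 0 <= s <= T -> norm (minus (Rl lam s 0 x) (Sh (s - 0) u0)) <= al) ->
  (forall s, 0 <= s <= T -> norm (averaging_gap lam s 0 s) <= al) ->
  0 <= m -> (forall s, 0 <= s <= T -> norm (minus (v s) (u s)) <= m * exp (2 * (M1 * L) * s)) ->
  0 <= t <= T -> norm (minus (v t) (u t)) <= (al + al) + m / 2 * exp (2 * (M1 * L) * t).
Proof.
intros Hmu Hl Hv Hvr Hinit Hgap Hm Hle Ht.
set (b := M1 * L). assert (Hb : 0 < b) by (unfold b; nra).
set (Iu := RInt (fun tau => Rl lam t tau (F (tau / lam) (u tau))) 0 t).
assert (HIu := RInt_correct _ _ _ (ex_RInt_forced lam t Hl (proj1 Ht))). fold Iu in HIu.
assert (Hav : norm (minus Iu (minus (u t) (Sh (t - 0) u0))) <= al).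
{ replace (minus (u t) (Sh (t - 0) u0)) with (RInt (fun tau => Sh (t - tau) (Fh (u tau))) 0 t).
  apply Hgap; auto. apply is_RInt_unique. apply Hmu. lra. }
assert (Hlip : norm (minus (minus (v t) (Rl lam t 0 x)) Iu) <= m / 2 * (exp (2 * b * t) - 1)).
{ replace (m / 2) with (b * m / (2 * b)) by (field; lra).
  replace (b * m / (2 * b) * (exp (2 * b * t) - 1))
    with (0 * t + b * m / (2 * b) * (exp (2 * b * t) - 1)) by ring.
  apply (norm_RInt_le_exp _ t _ 0 (b * m) (2 * b) (proj1 Ht) ltac:(lra)
           (is_RInt_minus _ _ _ _ _ _ (proj2 Hv t (proj1 Ht)) HIu)).
  intros tau Htau. cbv beta.
  rewrite <- (linear_minus (K:=R_AbsRing) (U:=E) (V:=E)) by (apply Rl_lin; auto; lra).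
  eapply Rle_trans. apply HR_boundT; auto; lra.
  eapply Rle_trans. apply Rmult_le_compat_l. lra. apply HF_lip_r.
  apply Rdiv_le_0_compat; lra. apply Hvr; lra. apply Hu_bound; lra.
  apply Rle_trans with (M1 * (L * (m * exp (2 * b * tau)))).
  - apply Rmult_le_compat_l. lra. apply Rmult_le_compat_l. lra. apply (Hle tau). lra.
  - unfold b; right; ring. }
eapply Rle_trans. right.
apply (f_equal norm ((@minus_decomp E) (v t) (u t) (Rl lam t 0 x) (Sh (t - 0) u0))).
eapply Rle_trans. apply norm_plus_le.
eapply Rle_trans. apply Rplus_le_compat_l. apply (norm_minus_triangle _ Iu).
assert (0 < exp (2 * b * t)) by apply exp_pos.
assert (Hi := Hinit t Ht). fold b. nra.
Qed.

Lemma rescaled_minus_averaged_bound (u0 : E) (v : R -> E) lam x al :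
  mild (fun t s => Sh (t - s)) (fun _ => Fh) u0 u ->
  0 < lam -> mild (Rl lam) (fun tau => F (tau / lam)) x v ->
  (forall s, 0 <= s <= T -> norm (v s) <= r) ->
  (forall s, 0 <= s <= T -> norm (minus (Rl lam s 0 x) (Sh (s - 0) u0)) <= al) ->
  (forall s, 0 <= s <= T -> norm (averaging_gap lam s 0 s) <= al) ->
  forall t, 0 <= t <= T -> norm (minus (v t) (u t)) <= 4 * al * exp (2 * (M1 * L) * T).
Proof.
intros Hmu Hl Hv Hvr Hinit Hgap t Ht.
assert (Hal : 0 <= al)
  by (eapply Rle_trans; [apply (norm_ge_0 (minus (Rl lam t 0 x) (Sh (t - 0) u0)))| apply (Hinit t Ht)]).
assert (Hb : 0 < M1 * L) by nra.
eapply Rle_trans.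
- apply (gronwall_exp T (al + al) (M1 * L) (fun s => norm (minus (v s) (u s)))); auto; try lra.
  + intros; apply norm_ge_0.
  + exists (r + r). intros s Hs. eapply Rle_trans. apply norm_minus_le_plus.
    assert (norm (v s) <= r) by auto. assert (norm (u s) <= r) by auto. lra.
  + intros m Hm Hle t' Ht'. apply (rescaled_minus_averaged_step u0 v lam x); auto.
- assert (exp (2 * (M1 * L) * t) <= exp (2 * (M1 * L) * T)) by (apply exp_le_compat; nra).
  nra.
Qed.

End AlongSolution.

Lemma mild_solutions_bounded (u0 : E) (ub : nat -> E) (lam : nat -> R) (un : nat -> R -> E) T :
  0 < T -> (forall n, 0 < lam n) ->
  (forall eps, 0 < eps -> exists N, forall n, (N <= n)%nat -> norm (minus (ub n) u0) < eps) ->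
  (forall n, mild (Rl (lam n)) (fun tau => F (tau / lam n)) (ub n) (un n)) ->
  exists r N0, 0 < r /\ (forall s, 0 <= s <= T -> norm (averaged_solution u0 s) <= r) /\
    forall n s, (N0 <= n)%nat -> 0 <= s <= T -> norm (un n s) <= r.
Proof.
intros HT Hlam Hub Hun.
pose proof (MT_pos T) as HM1. pose proof (exp_pos (2 * (MT T * c) * T)) as Hexp.
set (B := fun x => 2 * (MT T * x + MT T * c * T) * exp (2 * (MT T * c) * T)).
assert (HB : forall x y, 0 <= x <= y -> 0 < B y /\ B x <= B y).
{ intros x y Hxy. unfold B. assert (0 < MT T * c * T) by (apply Rmult_lt_0_compat; nra).
  split. apply Rmult_lt_0_compat; nra.
  apply Rmult_le_compat_r; [lra|]. apply Rmult_le_compat_l; [lra|]. nra. }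
destruct (Hub 1 Rlt_0_1) as [N0 HN0].
pose proof (norm_ge_0 u0).
exists (B (norm u0 + 1)), N0. split; [|split].
- apply (HB (norm u0 + 1)). lra.
- intros s Hs. eapply Rle_trans.
  + apply (mild_bounded (fun t s => Sh (t - s)) (fun _ => Fh) u0 _ T (MT T) c); try lra.
    * intros t s' y Hs' Ht. apply Sh_bound; auto.
    * intros; apply Fh_growth.
    * apply averaged_solution_mild.
  + apply (HB (norm u0)). lra.
- intros n s Hn Hs. eapply Rle_trans.
  + apply (mild_bounded (Rl (lam n)) (fun tau => F (tau / lam n)) (ub n) _ T (MT T) c); try lra.
    * intros t s' y Hs' Ht. apply Rl_bound; auto.
    * intros tau v Htau. apply HF_growth. apply Rdiv_le_0_compat; auto.
    * apply Hun.
  + apply HB. split. apply norm_ge_0.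
    eapply Rle_trans. apply (norm_le_minus _ u0). specialize (HN0 n Hn). lra.
Qed.

Lemma rescaled_converges (lam : nat -> R) (ub : nat -> E) (u0 : E) (un : nat -> R -> E) :
  (forall n, 0 < lam n) -> is_lim_seq lam 0 ->
  (forall eps, 0 < eps -> exists N, forall n, (N <= n)%nat -> norm (minus (ub n) u0) < eps) ->
  (forall n, mild (Rl (lam n)) (fun tau => F (tau / lam n)) (ub n) (un n)) ->
  forall T eps, 0 < T -> 0 < eps -> exists N, forall n t, (N <= n)%nat ->
    0 <= t <= T -> norm (minus (un n t) (averaged_solution u0 t)) < eps.
Proof.
intros Hlam Hlim Hub Hun T eps HT He.
set (u := averaged_solution u0).
assert (Hmu := averaged_solution_mild u0). fold u in Hmu.
destruct (mild_solutions_bounded u0 ub lam un T HT Hlam Hub Hun) as [r [N0 [Hr [Hur Hunr]]]].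
destruct (Fh_lip r Hr) as [L [HL [HLF HLFh]]].
pose proof (MT_pos T) as HM1.
assert (HRT : forall lam' t s y, 0 < lam' -> 0 <= s <= t -> t <= T ->
                norm (Rl lam' t s y) <= MT T * norm y) by (intros; apply Rl_bound; auto).
pose proof (exp_pos (2 * (MT T * L) * T)) as HexpT.
set (al := eps / (8 * exp (2 * (MT T * L) * T))).
assert (Hal : 0 < al) by (unfold al; apply Rdiv_lt_0_compat; lra).
destruct (HA2 u0 T al HT Hal) as [d1 [Hd1 HA2u]].
destruct (averaging_gap_small u T r L (MT T) HT HM1 HL HRT (Sh_bound0 T) HLF HLFh
            (proj1 Hmu) Hur al Hal) as [lam0 [Hlam0 Havg]].
destruct (lim_seq_threshold lam Hlim (Rmin d1 lam0) ltac:(apply Rmin_pos; auto)) as [N1 HN1].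
destruct (Hub d1 Hd1) as [N2 HN2].
exists (max N0 (max N1 N2)). intros n t Hn Ht.
assert (Hlam_n : lam n < Rmin d1 lam0).
{ assert (h := HN1 n ltac:(lia)). rewrite Rabs_right in h by (apply Rle_ge; left; apply Hlam). exact h. }
pose proof (Rmin_l d1 lam0). pose proof (Rmin_r d1 lam0). pose proof (Hlam n).
eapply Rle_lt_trans.
- apply (rescaled_minus_averaged_bound u T r L (MT T) HM1 HL HRT HLF (proj1 Hmu) Hur
           u0 (un n) (lam n) (ub n) al); auto.
  + intros s Hs. apply Hunr; auto; lia.
  + intros s Hs. left. apply HA2u; auto; try lra. apply HN2. lia.
  + intros s Hs. apply Havg; auto. lra.
- replace (4 * al * exp (2 * (MT T * L) * T)) with (eps / 2) by (unfold al; field; lra). lra.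
Qed.

End Averaging.

Theorem theorem1p1 (E : CompleteNormedModule R_AbsRing)
  (Rl : R -> R -> R -> E -> E) (Sh : R -> E -> E)
  (F : R -> E -> E) (Fh : E -> E) :
  @separable E ->
  (* the evolution systems R^(lam), lam > 0 *)
  (forall lam, 0 < lam -> evolution_system (Rl lam)) ->
  (* (A1) *)
  (exists (M w : R), 1 <= M /\
     forall lam t s x, 0 < lam -> 0 <= s <= t ->
       norm (Rl lam t s x) <= M * exp (w * (t - s)) * norm x) ->
  (* (A2) *)
  C0_semigroup Sh ->
  (forall (u : E) (T eps : R), 0 < T -> 0 < eps -> exists delta, 0 < delta /\
     forall lam (v : E) t s, 0 < lam < delta -> norm (minus v u) < delta ->
       0 <= s <= t -> t <= T ->
       norm (minus (Rl lam t s v) (Sh (t - s) u)) < eps) ->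
  (* (A3) *)
  (forall t (x : E), 0 <= t -> forall eps, 0 < eps -> exists delta, 0 < delta /\
     forall t' (y : E), 0 <= t' -> Rabs (t' - t) < delta -> norm (minus y x) < delta ->
       norm (minus (F t' y) (F t x)) < eps) ->
  (forall r, 0 < r -> exists L, forall t (x y : E), 0 <= t -> norm x <= r -> norm y <= r ->
     norm (minus (F t x) (F t y)) <= L * norm (minus x y)) ->
  (exists c, 0 < c /\ forall t (v : E), 0 <= t -> norm (F t v) <= c * (1 + norm v)) ->
  (* (A4) *)
  (forall u : E, rel_compact (fun y => exists t, 0 <= t /\ y = F t u)) ->
  (forall x : E, exists r L, 0 < r /\ forall y z : E,
     norm (minus y x) < r -> norm (minus z x) < r ->
     norm (minus (Fh y) (Fh z)) <= L * norm (minus y z)) ->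
  (forall (u : E) eps, 0 < eps -> exists T0 delta, 0 < delta /\
     forall T (v : E) h, T0 < T -> 0 < T -> norm (minus v u) < delta -> 0 < h ->
       norm (minus (scal (/ T) (RInt (fun tau => F (tau + h) v) 0 T)) (Fh u)) < eps) ->
  (* conclusion *)
  forall (lam : nat -> R) (ub : nat -> E) (u0 : E),
    (forall n, 0 < lam n) -> is_lim_seq lam 0 ->
    (forall eps, 0 < eps -> exists N, forall n, (N <= n)%nat -> norm (minus (ub n) u0) < eps) ->
    (forall n, exists un : R -> E, mild_solution (Rl (lam n)) F (lam n) (ub n) un) /\
    exists u : R -> E, mild_solution_avg Sh Fh u0 u /\
      forall un : nat -> R -> E,
        (forall n, mild_solution (Rl (lam n)) F (lam n) (ub n) (un n)) ->
        forall T eps, 0 < T -> 0 < eps -> exists N, forall n t, (N <= n)%nat ->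
          0 <= t <= T -> norm (minus (un n t) (u t)) < eps.
Proof.
intros _ Hevo [M [w [HM HA1]]] HC0 HA2 HF_cont HF_lip [c [Hc HF_growth]] HF_rel_compact _ HF_mean
  lam ub u0 Hlam Hlim Hub.
split.
- intros n. exists (rescaled_solution Rl F (lam n) (ub n)).
  apply (rescaled_solution_mild Rl F M w c); auto.
- exists (averaged_solution Sh Fh u0). split.
  + destruct (averaged_solution_mild Rl Sh F Fh M w c) with (u0 := u0) as [Hcont Hint]; auto.
    split; auto. intros t Ht.
    replace (Sh t u0) with (Sh (t - 0) u0) by (rewrite Rminus_0_r; reflexivity). apply Hint, Ht.
  + intros un Hun. apply (rescaled_converges Rl Sh F Fh M w c) with (lam := lam) (ub := ub); auto.
Qed.
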